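(* Let $q\ge1$, $\lambda$ a primitive $q$th root of unity, $g(z)=\lambda z+O(z^2)$ holomorphic near $0$ with $f:=g^{\circ q}$ of the form $f(z)=z+z^{q+1}+bz^{2q+1}+O(z^{2q+2})$, and $0<r_0<1$ such that $f$ is univalent in a neighborhood of $\overline{\mathbb D}(0,r_0)$, $0$ is its only fixed point in $\overline{\mathbb D}(0,r_0)$ and $\operatorname{Re}(f')>0$ there. Let $g_n(z)=\lambda_nz+O(z^2)$, $|\lambda_n|\ne1$, with $f_n:=g_n^{\circ q}$ holomorphic near $\overline{\mathbb D}(0,r_0)$ and $f_n\to f$ uniformly on $\overline{\mathbb D}(0,r_0)$; for large $n$ the fixed points of $f_n$ in $\overline{\mathbb D}(0,r_0)$ are $0$ and the points of a $q$-cycle $\mathscr O_n$ of $g_n$. Let $0<r_1<r_0/2$ be such that $\overline{\mathbb D}(0,r_1)$ is mapped univalently into $\mathbb D(0,r_0)$ by $f$ and $f^{-1}$ and $\sup_{|z|\le r_1}|f_n(z)-z|\le r_1/2$ for all large $n$. Then there is $0<r_2<r_1$ such that for all sufficiently large $n$: if $z_0$, $z_1:=f_n(z_0)$, $z_2:=f_n(z_1)$ lie in $\mathbb D(0,r_2)$ and are not fixed by $f_n$, then the segment $[z_1,z_2]$ and the curve $f_n([z_0,z_1])$ are homotopic (with fixed endpoints) in $\mathbb D(0,r_1)\setminus(\{0\}\cup\mathscr O_n)$. *)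

From Stdlib Require Import Reals.
From Coquelicot Require Import Coquelicot.

Open Scope R_scope.

Fixpoint iterc (n : nat) (g : C -> C) (z : C) : C :=
  match n with
  | O => z
  | S m => g (iterc m g z)
  end.

Definition disk (r : R) (z : C) : Prop := Cmod z < r.
Definition cdisk (r : R) (z : C) : Prop := Cmod z <= r.

Definition holomorphic_on (U : C -> Prop) (f : C -> C) : Prop :=
  forall z, U z -> @ex_derive C_AbsRing C_NormedModule f z.

Definition injective_on (U : C -> Prop) (f : C -> C) : Prop :=
  forall z w, U z -> U w -> f z = f w -> z = w.

Definition holomorphic_near (K : C -> Prop) (f : C -> C) : Prop :=
  exists U : C -> Prop, @open C_UniformSpace U /\ (forall z, K z -> U z) /\
    holomorphic_on U f.

Definition univalent_near (K : C -> Prop) (f : C -> C) : Prop :=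
  exists U : C -> Prop, @open C_UniformSpace U /\ (forall z, K z -> U z) /\
    holomorphic_on U f /\ injective_on U f.

Definition unit_interval (t : R) : Prop := 0 <= t <= 1.
Definition unit_square (p : R * R) : Prop :=
  unit_interval (fst p) /\ unit_interval (snd p).

Definition path_continuous (gam : R -> C) : Prop :=
  forall t, unit_interval t ->
    filterlim gam (within unit_interval (locally t)) (locally (gam t)).

Definition homotopic_rel_endpoints (X : C -> Prop) (gam0 gam1 : R -> C) : Prop :=
  path_continuous gam0 /\ path_continuous gam1 /\
  gam0 0 = gam1 0 /\ gam0 1 = gam1 1 /\
  exists H : R * R -> C,
    (forall p, unit_square p ->
       filterlim H (within unit_square (locally p)) (locally (H p))) /\
    (forall p, unit_square p -> X (H p)) /\
    (forall t, unit_interval t -> H (0, t) = gam0 t) /\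
    (forall t, unit_interval t -> H (1, t) = gam1 t) /\
    (forall s, unit_interval s -> H (s, 0) = gam0 0) /\
    (forall s, unit_interval s -> H (s, 1) = gam0 1).

Definition segment (a b : C) (t : R) : C := Cplus a (Cmult (RtoC t) (Cminus b a)).

Definition primitive_root (q : nat) (lam : C) : Prop :=
  Cpow lam q = RtoC 1 /\ forall k, (0 < k < q)%nat -> Cpow lam k <> RtoC 1.

Definition exact_period (q : nat) (g : C -> C) (w : C) : Prop :=
  iterc q g w = w /\ forall k, (0 < k < q)%nat -> iterc k g w <> w.

Definition in_cycle (q : nat) (g : C -> C) (w z : C) : Prop :=
  exists k, (k < q)%nat /\ z = iterc k g w.

(* Write f_n = g_n^q and h_n = f_n - id. Since f(z) - z = O(z^2) and f_n -> f uniformly, sup |h_n|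
   on a small disk D(0, R) is at most R/24 for large n, and the Cauchy estimate makes h_n
   1/3-Lipschitz on D(0, R/8). For a fixed point w of f_n there, the straight-line homotopy
   (1 - s) [z1, z2](t) + s f_n([z0, z1](t)) differs from the point zeta = [z0, z1](t) by a convex
   combination of values of h_n, hence by at most |zeta - w|/2; and zeta <> w because z0 is not
   fixed. So the homotopy avoids 0 and the q-cycle, which are fixed points of f_n, and stays in
   D(0, r1).
   For the Cauchy estimate, Goursat's lemma gives a primitive F of the holomorphic function u, and
   the identity  int_0^(2 pi) F(y + r e^(i th)) e^(-i th) d th = 2 pi r u(y)  turns the
   Lipschitz bound |F'| = |u| <= M into |u x - u y| <= M |x - y| / r. *)

From Stdlib Require Import Reals Lra Lia.
From Coquelicot Require Import Coquelicot.
Open Scope R_scope.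

Local Notation CR := C_R_CompleteNormedModule.

Ltac C_ext_field := apply injective_projections; simpl; try field; try ring.

Lemma Cmod_im (z : C) : Rabs (snd z) <= Cmod z.
Proof.
  destruct z as [x y]; unfold Cmod; simpl.
  rewrite <- sqrt_Rsqr_abs. apply sqrt_le_1_alt. unfold Rsqr. nra.
Qed.

Lemma Cmod_le_sum (z : C) : Cmod z <= Rabs (fst z) + Rabs (snd z).
Proof.
  destruct z as [x y]; unfold Cmod; simpl.
  pose proof (Rabs_pos x); pose proof (Rabs_pos y).
  rewrite <- (sqrt_Rsqr (Rabs x + Rabs y)) by lra.
  apply sqrt_le_1_alt. unfold Rsqr.
  assert (x * x = Rabs x * Rabs x) by (rewrite <- Rabs_mult, Rabs_right; nra).
  assert (y * y = Rabs y * Rabs y) by (rewrite <- Rabs_mult, Rabs_right; nra).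
  simpl. nra.
Qed.

Lemma Cmod_sub_sym (a b : C) : Cmod (a - b) = Cmod (b - a).
Proof. replace (a - b)%C with (- (b - a))%C by ring. apply Cmod_opp. Qed.

Lemma Cmod_RtoC_mult (t : R) (z : C) : Cmod (RtoC t * z) = Rabs t * Cmod z.
Proof. rewrite Cmod_mult, Cmod_R. reflexivity. Qed.

Lemma Cmod_triangle_inv (a b : C) : Cmod a - Cmod b <= Cmod (a + b).
Proof.
  replace a with ((a + b) + - b)%C at 1 by ring.
  pose proof (Cmod_triangle (a + b) (- b)) as H. rewrite Cmod_opp in H. lra.
Qed.

Lemma norm_CR (z : C) : @norm R_AbsRing C_R_NormedModule z = Cmod z.
Proof.
  destruct z as [x y]. unfold norm; simpl. unfold prod_norm, Cmod; simpl.
  f_equal. simpl. unfold abs; simpl. rewrite !Rmult_1_r.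
  rewrite <- !Rabs_mult. rewrite !Rabs_right by nra. reflexivity.
Qed.

Lemma ball_C_of_Cmod_lt (z w : C) (e : R) : Cmod (w - z) < e -> @ball C_UniformSpace z e w.
Proof.
  intros H. split; simpl; unfold AbsRing_ball, minus, plus, opp; simpl; unfold abs; simpl.
  - eapply Rle_lt_trans; [| exact H]. pose proof (re_le_Cmod (w - z)%C) as Hre.
    destruct w, z; simpl in *. replace (r + - r1) with (r - r1) by ring. exact Hre.
  - eapply Rle_lt_trans; [| exact H]. pose proof (Cmod_im (w - z)%C) as Him.
    destruct w, z; simpl in *. replace (r0 + - r2) with (r0 - r2) by ring. exact Him.
Qed.

Lemma Cmod_lt_of_ball_C (z w : C) (e : R) : @ball C_UniformSpace z e w -> Cmod (w - z) < 2 * e.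
Proof.
  destruct z as [x y], w as [x' y']. intros [H1 H2].
  change (Rabs (x' + - x) < e) in H1. change (Rabs (y' + - y) < e) in H2.
  eapply Rle_lt_trans; [apply Cmod_le_sum|]. simpl. lra.
Qed.

Lemma exists_pow2_lt (A eps : R) : 0 < eps -> exists k, A / 2 ^ k < eps.
Proof.
  intros He.
  destruct (pow_lt_1_zero (/ 2) ltac:(rewrite Rabs_right; lra) (eps / (Rabs A + 1)))
    as [k Hk]; [apply Rdiv_lt_0_compat; pose proof (Rabs_pos A); lra|].
  exists k. specialize (Hk k (le_n k)).
  rewrite Rabs_right in Hk by (apply Rle_ge, pow_le; lra).
  rewrite pow_inv in Hk. unfold Rdiv.
  pose proof (Rabs_pos A). pose proof (Rle_abs A).
  assert (0 < / 2 ^ k) by (apply Rinv_0_lt_compat, pow_lt; lra).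
  apply Rmult_lt_compat_r with (r := Rabs A + 1) in Hk; [|lra].
  unfold Rdiv in Hk. rewrite Rmult_assoc, Rinv_l in Hk by lra. nra.
Qed.

(** * Epsilon-delta calculus for complex functions and plane curves *)

Definition ccont (u : C -> C) (z : C) := forall eps, 0 < eps -> exists del, 0 < del /\
  forall w, Cmod (w - z) < del -> Cmod (u w - u z) < eps.

Definition is_cderiv (u : C -> C) (z l : C) := forall eps, 0 < eps -> exists del, 0 < del /\
  forall w, Cmod (w - z) < del -> Cmod (u w - u z - l * (w - z)) <= eps * Cmod (w - z).

Definition rcont (g : R -> C) (t : R) := forall eps, 0 < eps -> exists del, 0 < del /\
  forall s, Rabs (s - t) < del -> Cmod (g s - g t) < eps.

Definition is_rderiv (g : R -> C) (t : R) (d : C) := forall eps, 0 < eps -> exists del, 0 < del /\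
  forall h, Rabs h < del -> Cmod (g (t + h) - g t - RtoC h * d) <= eps * Rabs h.

Lemma rcont_continuous (g : R -> C) (t : R) : rcont g t -> @continuous R_UniformSpace CR g t.
Proof.
  intros H. apply (filterlim_locally (T:=R_UniformSpace) (U:=CR)). intros eps.
  destruct (H eps (cond_pos eps)) as [d [Hd Hs]].
  exists (mkposreal d Hd). intros s Hst. apply ball_C_of_Cmod_lt, Hs, Hst.
Qed.

Lemma is_rderiv_is_derive (g : R -> C) (t : R) (d : C) :
  is_rderiv g t d -> @is_derive R_AbsRing CR g t d.
Proof.
  intros H. split.
  - apply is_linear_scal_l.
  - intros x Hx. apply (@is_filter_lim_locally_unique R_AbsRing (AbsRing_NormedModule R_AbsRing)) in Hx. subst x.
    intros eps. destruct (H eps (cond_pos eps)) as [del [Hdel Hh]].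
    exists (mkposreal del Hdel). intros y Hy. simpl in Hy.
    unfold ball in Hy; simpl in Hy; unfold AbsRing_ball, abs, minus, plus, opp in Hy; simpl in Hy.
    specialize (Hh (y + - t) Hy). assert (E : t + (y + - t) = y) by (clear; lra). rewrite E in Hh.
    rewrite norm_CR. unfold norm; simpl. unfold abs; simpl.
    match goal with |- Cmod ?X <= _ => replace X with (g y - g t - RtoC (y + - t) * d)%C end.
    exact Hh.
    destruct (g y), (g t), d. apply injective_projections; simpl.
    all: unfold minus, plus, opp, scal, mult; simpl; unfold mult; simpl; ring.
Qed.

Lemma ex_derive_is_cderiv (u : C -> C) (z : C) :
  @ex_derive C_AbsRing C_NormedModule u z -> is_cderiv u z (C_derive u z).
Proof.
  intros Hu. destruct (C_derive_correct u z z Hu) as [_ H]. intros eps Heps.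
  destruct (H z (fun P HP => HP) (mkposreal eps Heps)) as [d Hd].
  exists d. split; [apply cond_pos|]. intros w Hw.
  assert (Hb : @ball (AbsRing_UniformSpace C_AbsRing) z d w).
  { unfold ball; simpl. unfold AbsRing_ball. unfold abs; simpl.
    replace (minus w z) with (w - z)%C by (unfold minus, plus, opp; simpl; ring). exact Hw. }
  specialize (Hd w Hb). simpl in Hd. unfold norm in Hd; simpl in Hd.
  replace (u w - u z - C_derive u z * (w - z))%C
    with (minus (minus (u w) (u z)) (scal (minus w z) (C_derive u z))).
  exact Hd.
  unfold minus, plus, opp, scal; simpl. unfold mult; simpl. ring.
Qed.

Lemma is_cderiv_ccont (u : C -> C) (z l : C) : is_cderiv u z l -> ccont u z.
Proof.
  intros H eps Heps.
  destruct (H 1 Rlt_0_1) as [d [Hd Hw]].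
  exists (Rmin d (eps / (Cmod l + 2))). split.
  { apply Rmin_pos; auto. apply Rdiv_lt_0_compat; auto. pose proof (Cmod_ge_0 l); lra. }
  intros w Hwz.
  assert (H1 : Cmod (w - z) < d) by (eapply Rlt_le_trans; [exact Hwz| apply Rmin_l]).
  assert (H2 : Cmod (w - z) < eps / (Cmod l + 2)) by (eapply Rlt_le_trans; [exact Hwz| apply Rmin_r]).
  specialize (Hw w H1).
  replace (u w - u z)%C with ((u w - u z - l * (w - z)) + l * (w - z))%C by ring.
  eapply Rle_lt_trans; [apply Cmod_triangle|]. rewrite Cmod_mult.
  pose proof (Cmod_ge_0 l). pose proof (Cmod_ge_0 (w - z)).
  apply Rmult_lt_compat_r with (r := Cmod l + 2) in H2; [|lra].
  unfold Rdiv in H2. rewrite Rmult_assoc, Rinv_l in H2 by lra. nra.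
Qed.

Lemma is_cderiv_minus_id (f : C -> C) (z l : C) :
  is_cderiv f z l -> is_cderiv (fun w => f w - w)%C z (l - 1)%C.
Proof.
  intros H eps He. destruct (H eps He) as [d [Hd Hw]]. exists d. split; auto.
  intros w Hwz. specialize (Hw w Hwz).
  replace (f w - w - (f z - z) - (l - 1) * (w - z))%C with (f w - f z - l * (w - z))%C by ring.
  exact Hw.
Qed.

Lemma ccont_minus (f g : C -> C) (z : C) :
  ccont f z -> ccont g z -> ccont (fun w => f w - g w)%C z.
Proof.
  intros Hf Hg eps He.
  destruct (Hf (eps / 2)) as [d1 [Hd1 H1]]; [lra|].
  destruct (Hg (eps / 2)) as [d2 [Hd2 H2]]; [lra|].
  exists (Rmin d1 d2). split; [apply Rmin_pos; auto|].
  intros w Hw.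
  assert (Hw1 : Cmod (w - z) < d1) by (eapply Rlt_le_trans; [exact Hw|apply Rmin_l]).
  assert (Hw2 : Cmod (w - z) < d2) by (eapply Rlt_le_trans; [exact Hw|apply Rmin_r]).
  specialize (H1 w Hw1). specialize (H2 w Hw2).
  replace (f w - g w - (f z - g z))%C with ((f w - f z) + - (g w - g z))%C by ring.
  eapply Rle_lt_trans; [apply Cmod_triangle|]. rewrite Cmod_opp. lra.
Qed.

Lemma ccont_affine (A l z : C) : ccont (fun w => A + l * w)%C z.
Proof.
  intros eps He. exists (eps / (Cmod l + 1)). split.
  { apply Rdiv_lt_0_compat; auto. pose proof (Cmod_ge_0 l); lra. }
  intros w Hw. replace (A + l * w - (A + l * z))%C with (l * (w - z))%C by ring.
  rewrite Cmod_mult. pose proof (Cmod_ge_0 l). pose proof (Cmod_ge_0 (w - z)).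
  apply Rmult_lt_compat_r with (r := Cmod l + 1) in Hw; [|lra].
  unfold Rdiv in Hw. rewrite Rmult_assoc, Rinv_l in Hw by lra. nra.
Qed.

Lemma ccont_const (K z : C) : ccont (fun _ => K) z.
Proof.
  intros eps He. exists 1. split; [lra|]. intros w _.
  replace (K - K)%C with (RtoC 0) by ring. rewrite Cmod_0. lra.
Qed.

Lemma is_cderiv_quadratic (A l z : C) :
  is_cderiv (fun w => A * w + l * w * w / 2)%C z (A + l * z)%C.
Proof.
  assert (H2 : RtoC 2 <> 0%C) by (intros H; injection H; lra).
  intros eps He. exists (2 * eps / (Cmod l + 1)). split.
  { apply Rdiv_lt_0_compat; [lra|]. pose proof (Cmod_ge_0 l); lra. }
  intros w Hw.
  replace (A * w + l * w * w / 2 - (A * z + l * z * z / 2) - (A + l * z) * (w - z))%C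
    with (l / 2 * ((w - z) * (w - z)))%C by (field; exact H2).
  rewrite !Cmod_mult, Cmod_div, Cmod_R, Rabs_right by (exact H2 || lra).
  pose proof (Cmod_ge_0 l). pose proof (Cmod_ge_0 (w - z)).
  assert (Cmod l * Cmod (w - z) <= 2 * eps).
  { apply Rlt_le in Hw. apply Rmult_le_compat_r with (r := Cmod l + 1) in Hw; [|lra].
    unfold Rdiv in Hw. rewrite Rmult_assoc, Rinv_l in Hw by lra. nra. }
  unfold Rdiv. nra.
Qed.

Lemma is_rderiv_rcont (g : R -> C) (t : R) (d : C) : is_rderiv g t d -> rcont g t.
Proof.
  intros H eps He. destruct (H 1 Rlt_0_1) as [del [Hdel Hh]].
  exists (Rmin del (eps / (Cmod d + 2))). split.
  { apply Rmin_pos; auto. apply Rdiv_lt_0_compat; auto. pose proof (Cmod_ge_0 d); lra. }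
  intros s Hs.
  assert (H1 : Rabs (s - t) < del) by (eapply Rlt_le_trans; [exact Hs|apply Rmin_l]).
  assert (H2 : Rabs (s - t) < eps / (Cmod d + 2)) by (eapply Rlt_le_trans; [exact Hs|apply Rmin_r]).
  specialize (Hh (s - t) H1). replace (t + (s - t)) with s in Hh by ring.
  replace (g s - g t)%C with ((g s - g t - RtoC (s - t) * d) + RtoC (s - t) * d)%C by ring.
  eapply Rle_lt_trans; [apply Cmod_triangle|]. rewrite Cmod_RtoC_mult.
  pose proof (Cmod_ge_0 d). pose proof (Rabs_pos (s - t)).
  apply Rmult_lt_compat_r with (r := Cmod d + 2) in H2; [|lra].
  unfold Rdiv in H2. rewrite Rmult_assoc, Rinv_l in H2 by lra. nra.
Qed.

Lemma rcont_comp (F : C -> C) (g : R -> C) (t : R) : ccont F (g t) -> rcont g t -> rcont (fun s => F (g s)) t.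
Proof.
  intros HF Hg eps He. destruct (HF eps He) as [d1 [Hd1 H1]].
  destruct (Hg d1 Hd1) as [d2 [Hd2 H2]]. exists d2. split; auto.
Qed.

Lemma rcont_plus (f g : R -> C) (t : R) : rcont f t -> rcont g t -> rcont (fun s => f s + g s)%C t.
Proof.
  intros Hf Hg eps He.
  destruct (Hf (eps / 2)) as [d1 [Hd1 H1]]; [lra|].
  destruct (Hg (eps / 2)) as [d2 [Hd2 H2]]; [lra|].
  exists (Rmin d1 d2). split; [apply Rmin_pos; auto|].
  intros s Hs.
  assert (Hs1 : Rabs (s - t) < d1) by (eapply Rlt_le_trans; [exact Hs|apply Rmin_l]).
  assert (Hs2 : Rabs (s - t) < d2) by (eapply Rlt_le_trans; [exact Hs|apply Rmin_r]).
  specialize (H1 s Hs1). specialize (H2 s Hs2).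
  replace (f s + g s - (f t + g t))%C with ((f s - f t) + (g s - g t))%C by ring.
  eapply Rle_lt_trans; [apply Cmod_triangle|]. lra.
Qed.

Lemma rcont_mult (f g : R -> C) (t : R) : rcont f t -> rcont g t -> rcont (fun s => f s * g s)%C t.
Proof.
  intros Hf Hg eps He.
  set (Kf := Cmod (f t) + 1). set (Kg := Cmod (g t) + 1).
  assert (HKf : 0 < Kf) by (unfold Kf; pose proof (Cmod_ge_0 (f t)); lra).
  assert (HKg : 0 < Kg) by (unfold Kg; pose proof (Cmod_ge_0 (g t)); lra).
  set (e1 := Rmin 1 (eps / (2 * Kg))).
  assert (He1 : 0 < e1) by (unfold e1; apply Rmin_pos; [lra|apply Rdiv_lt_0_compat; lra]).
  set (e2 := eps / (2 * (Kf + 1))).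
  assert (He2 : 0 < e2) by (unfold e2; apply Rdiv_lt_0_compat; lra).
  destruct (Hf e1 He1) as [d1 [Hd1 H1]].
  destruct (Hg e2 He2) as [d2 [Hd2 H2]].
  exists (Rmin d1 d2). split; [apply Rmin_pos; auto|].
  intros s Hs.
  assert (Hs1 : Rabs (s - t) < d1) by (eapply Rlt_le_trans; [exact Hs|apply Rmin_l]).
  assert (Hs2 : Rabs (s - t) < d2) by (eapply Rlt_le_trans; [exact Hs|apply Rmin_r]).
  specialize (H1 s Hs1). specialize (H2 s Hs2).
  replace (f s * g s - f t * g t)%C with ((f s - f t) * g t + f s * (g s - g t))%C by ring.
  eapply Rle_lt_trans; [apply Cmod_triangle|]. rewrite !Cmod_mult.
  assert (Hfs : Cmod (f s) <= Kf + 1).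
  { replace (f s) with (f t + (f s - f t))%C by ring. eapply Rle_trans; [apply Cmod_triangle|].
    unfold Kf. assert (e1 <= 1) by apply Rmin_l. lra. }
  assert (Ha : Cmod (f s - f t) * Cmod (g t) <= eps / 2).
  { assert (e1 <= eps / (2 * Kg)) by apply Rmin_r.
    assert (Cmod (f s - f t) <= eps / (2 * Kg)) by lra.
    apply Rle_trans with (eps / (2 * Kg) * Kg).
    - apply Rmult_le_compat; try apply Cmod_ge_0; auto. unfold Kg; lra.
    - right. field. lra. }
  assert (Hb : Cmod (f s) * Cmod (g s - g t) < eps / 2).
  { apply Rle_lt_trans with ((Kf + 1) * Cmod (g s - g t)).
    - apply Rmult_le_compat_r; [apply Cmod_ge_0|auto].
    - apply Rlt_le_trans with ((Kf + 1) * e2).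
      + apply Rmult_lt_compat_l; lra.
      + right. unfold e2. field. lra. }
  lra.
Qed.

Lemma rcont_const (c : C) (t : R) : rcont (fun _ => c) t.
Proof. intros eps He. exists 1. split; [lra|]. intros. replace (c - c)%C with (RtoC 0) by ring. rewrite Cmod_0. lra. Qed.

Lemma is_rderiv_lipschitz (g : R -> C) (t : R) (d : C) : is_rderiv g t d ->
  exists del, 0 < del /\ forall h, Rabs h < del -> Cmod (g (t + h)%R - g t) <= (Cmod d + 1) * Rabs h.
Proof.
  intros H. destruct (H 1 Rlt_0_1) as [del [Hdel Hh]]. exists del. split; auto.
  intros h Hh'. specialize (Hh h Hh').
  replace (g (t + h)%R - g t)%C with ((g (t + h)%R - g t - RtoC h * d) + RtoC h * d)%C by ring.
  eapply Rle_trans; [apply Cmod_triangle|]. rewrite Cmod_RtoC_mult. nra.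
Qed.

Lemma is_rderiv_comp (F : C -> C) (f : C) (g : R -> C) (t : R) (d : C) :
  is_cderiv F (g t) f -> is_rderiv g t d -> is_rderiv (fun s => F (g s)) t (f * d)%C.
Proof.
  intros HF Hg eps He.
  destruct (is_rderiv_lipschitz g t d Hg) as [d1 [Hd1 Hb]].
  set (K := Cmod d + 1). assert (HK : 0 < K) by (unfold K; pose proof (Cmod_ge_0 d); lra).
  set (Kf := Cmod f + 1). assert (HKf : 0 < Kf) by (unfold Kf; pose proof (Cmod_ge_0 f); lra).
  destruct (HF (eps / (2 * K))) as [dF [HdF HFd]]. { apply Rdiv_lt_0_compat; lra. }
  destruct (Hg (eps / (2 * Kf))) as [d2 [Hd2 Hg2]]. { apply Rdiv_lt_0_compat; lra. }
  exists (Rmin d1 (Rmin d2 (dF / K))). split.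
  { apply Rmin_pos; auto. apply Rmin_pos; auto. apply Rdiv_lt_0_compat; auto. }
  intros h Hh.
  assert (Hh1 : Rabs h < d1) by (eapply Rlt_le_trans; [exact Hh|apply Rmin_l]).
  assert (Hh2 : Rabs h < d2) by (eapply Rlt_le_trans; [exact Hh|eapply Rle_trans; [apply Rmin_r|apply Rmin_l]]).
  assert (Hh3 : Rabs h < dF / K) by (eapply Rlt_le_trans; [exact Hh|eapply Rle_trans; [apply Rmin_r|apply Rmin_r]]).
  specialize (Hb h Hh1). fold K in Hb.
  assert (Hw : Cmod (g (t + h)%R - g t) < dF).
  { eapply Rle_lt_trans; [exact Hb|]. apply Rmult_lt_compat_l with (r := K) in Hh3; auto.
    unfold Rdiv in Hh3. rewrite <- Rmult_assoc, (Rmult_comm K dF), Rmult_assoc, Rinv_r, Rmult_1_r in Hh3 by lra. exact Hh3. }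
  specialize (HFd _ Hw). specialize (Hg2 h Hh2).
  replace (F (g (t + h)%R) - F (g t) - RtoC h * (f * d))%C
    with ((F (g (t + h)%R) - F (g t) - f * (g (t + h)%R - g t)) + f * (g (t + h)%R - g t - RtoC h * d))%C by ring.
  eapply Rle_trans; [apply Cmod_triangle|]. rewrite Cmod_mult.
  pose proof (Cmod_ge_0 f). pose proof (Rabs_pos h). pose proof (Cmod_ge_0 (g (t + h)%R - g t)).
  assert (A1 : eps / (2 * K) * Cmod (g (t + h)%R - g t) <= eps / 2 * Rabs h).
  { apply Rle_trans with (eps / (2 * K) * (K * Rabs h)).
    - apply Rmult_le_compat_l; [left; apply Rdiv_lt_0_compat; lra|exact Hb].
    - right. field. lra. }
  assert (A2 : Cmod f * Cmod (g (t + h)%R - g t - RtoC h * d) <= eps / 2 * Rabs h).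
  { apply Rle_trans with (Kf * (eps / (2 * Kf) * Rabs h)).
    - apply Rmult_le_compat; try apply Cmod_ge_0; auto. unfold Kf; lra.
    - right. field. lra. }
  lra.
Qed.

Lemma is_rderiv_affine (y s : C) (g : R -> C) (t : R) (d : C) :
  is_rderiv g t d -> is_rderiv (fun th => y + s * g th)%C t (s * d)%C.
Proof.
  intros H eps He.
  destruct (H (eps / (Cmod s + 1))) as [del [Hdel Hh]]. { apply Rdiv_lt_0_compat; auto. pose proof (Cmod_ge_0 s); lra. }
  exists del. split; auto. intros h Hh'. specialize (Hh h Hh').
  replace (y + s * g (t + h)%R - (y + s * g t) - RtoC h * (s * d))%C with (s * (g (t + h)%R - g t - RtoC h * d))%C by ring.
  rewrite Cmod_mult. pose proof (Cmod_ge_0 s). pose proof (Rabs_pos h).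
  apply Rle_trans with (Cmod s * (eps / (Cmod s + 1) * Rabs h)).
  - apply Rmult_le_compat_l; auto.
  - assert (Cmod s * (eps / (Cmod s + 1)) <= eps).
    { unfold Rdiv. rewrite <- Rmult_assoc. apply Rmult_le_reg_r with (r := Cmod s + 1); [lra|].
      rewrite Rmult_assoc, Rinv_l by lra. nra. }
    nra.
Qed.

Lemma is_rderiv_plus (A B : R -> C) (t : R) (a b : C) :
  is_rderiv A t a -> is_rderiv B t b -> is_rderiv (fun s => A s + B s)%C t (a + b)%C.
Proof.
  intros HA HB eps He.
  destruct (HA (eps / 2)) as [d1 [Hd1 H1]]; [lra|].
  destruct (HB (eps / 2)) as [d2 [Hd2 H2]]; [lra|].
  exists (Rmin d1 d2). split; [apply Rmin_pos; auto|]. intros h Hh.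
  specialize (H1 h (Rlt_le_trans _ _ _ Hh (Rmin_l _ _))). specialize (H2 h (Rlt_le_trans _ _ _ Hh (Rmin_r _ _))).
  replace (A (t + h)%R + B (t + h)%R - (A t + B t) - RtoC h * (a + b))%C
    with ((A (t + h)%R - A t - RtoC h * a) + (B (t + h)%R - B t - RtoC h * b))%C by ring.
  eapply Rle_trans; [apply Cmod_triangle|]. lra.
Qed.

Lemma is_rderiv_ext (A B : R -> C) (t : R) (a : C) :
  (forall s, A s = B s) -> is_rderiv A t a -> is_rderiv B t a.
Proof. intros E H eps He. destruct (H eps He) as [d [Hd Hh]]. exists d. split; auto. intros h. rewrite <- !E. auto. Qed.

(* Polarization: A B = ((A + B)^2 - (A - B)^2) / 4, and squaring is complex differentiable. *)
Lemma is_rderiv_mult (A B : R -> C) (t : R) (a b : C) :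
  is_rderiv A t a -> is_rderiv B t b -> is_rderiv (fun s => A s * B s)%C t (a * B t + A t * b)%C.
Proof.
  intros HA HB.
  assert (Hsq : forall G g', is_rderiv G t g' -> is_rderiv (fun s => G s * G s)%C t (2 * G t * g')%C).
  { intros G g' HG. apply (is_rderiv_ext (fun s => 0 * G s + 2 * G s * G s / 2)%C).
    { intros s. field. }
    replace (2 * G t * g')%C with ((0 + 2 * G t) * g')%C by ring.
    exact (is_rderiv_comp (fun w => 0 * w + 2 * w * w / 2)%C _ G t g' (is_cderiv_quadratic 0 2 (G t)) HG). }
  pose proof (Hsq _ _ (is_rderiv_plus A B t a b HA HB)) as Hp.
  pose proof (Hsq _ _ (is_rderiv_plus A _ t a _ HA (is_rderiv_affine 0 (-1) B t b HB))) as Hm.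
  pose proof (is_rderiv_affine 0 (/ 4) _ t _ (is_rderiv_plus _ _ t _ _ Hp (is_rderiv_affine 0 (-1) _ t _ Hm))) as H.
  replace (a * B t + A t * b)%C
    with (/ 4 * (2 * (A t + B t) * (a + b) + -1 * (2 * (A t + (0 + -1 * B t)) * (a + -1 * b))))%C
    by (field; intros H4; injection H4; lra).
  refine (is_rderiv_ext _ _ t _ _ H). intros s. cbv beta. field; intros H4; injection H4; lra.
Qed.

Lemma is_rderiv_line (a b : C) (t : R) : is_rderiv (fun s => a + RtoC s * (b - a))%C t (b - a)%C.
Proof.
  intros eps He. exists 1. split; [lra|]. intros h _.
  replace (a + RtoC (t + h) * (b - a) - (a + RtoC t * (b - a)) - RtoC h * (b - a))%C
    with (RtoC 0) by (rewrite RtoC_plus; ring).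
  rewrite Cmod_0. pose proof (Rabs_pos h). nra.
Qed.

(** * Integrals along segments *)

Definition seg_integrand (u : C -> C) (a b : C) (t : R) : C :=
  (u (a + RtoC t * (b - a)) * (b - a))%C.
Definition seg_int (u : C -> C) (a b : C) : C := RInt (V:=CR) (seg_integrand u a b) 0 1.
Definition midpoint (a b : C) : C := ((fst a + fst b) / 2, (snd a + snd b) / 2).

Lemma midpointE (a b : C) : midpoint a b = (a + RtoC (1/2) * (b - a))%C.
Proof. unfold midpoint. destruct a, b. C_ext_field. Qed.

Lemma cdisk_convex (a b : C) (t rho : R) : Cmod a <= rho -> Cmod b <= rho -> 0 <= t <= 1 ->
  Cmod (a + RtoC t * (b - a)) <= rho.
Proof.
  intros Ha Hb Ht.
  replace (a + RtoC t * (b - a))%C with (RtoC (1 - t) * a + RtoC t * b)%C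
    by (rewrite RtoC_minus; ring).
  eapply Rle_trans; [apply Cmod_triangle|]. rewrite !Cmod_RtoC_mult.
  rewrite !Rabs_right by lra. nra.
Qed.

Lemma disk_convex (a b : C) (t rho : R) : Cmod a < rho -> Cmod b < rho -> 0 <= t <= 1 ->
  Cmod (a + RtoC t * (b - a)) < rho.
Proof.
  intros Ha Hb Ht. apply Rle_lt_trans with (Rmax (Cmod a) (Cmod b)).
  - apply cdisk_convex; auto; [apply Rmax_l|apply Rmax_r].
  - apply Rmax_lub_lt; auto.
Qed.

Lemma midpoint_in (a b : C) (rho : R) : Cmod a <= rho -> Cmod b <= rho -> Cmod (midpoint a b) <= rho.
Proof. intros. rewrite midpointE. apply cdisk_convex; auto; lra. Qed.

Lemma seg_integrand_rcont (u : C -> C) (a b : C) (t : R) :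
  ccont u (a + RtoC t * (b - a))%C -> rcont (seg_integrand u a b) t.
Proof.
  intros H. apply rcont_mult; [|apply rcont_const].
  apply rcont_comp; [exact H|]. exact (is_rderiv_rcont _ _ _ (is_rderiv_line a b t)).
Qed.

Lemma ex_seg_int (u : C -> C) (a b : C) :
  (forall t, 0 <= t <= 1 -> ccont u (a + RtoC t * (b - a))%C) ->
  ex_RInt (V:=CR) (seg_integrand u a b) 0 1.
Proof.
  intros H. apply ex_RInt_continuous. intros z Hz.
  rewrite Rmin_left, Rmax_right in Hz by lra.
  apply rcont_continuous, seg_integrand_rcont, H, Hz.
Qed.

Lemma ex_seg_int_in (u : C -> C) (rho : R) (a b : C) :
  (forall z, Cmod z <= rho -> ccont u z) -> Cmod a <= rho -> Cmod b <= rho ->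
  ex_RInt (V:=CR) (seg_integrand u a b) 0 1.
Proof. intros Hc Ha Hb. apply ex_seg_int. intros t Ht. apply Hc, cdisk_convex; auto. Qed.

Lemma seg_int_norm_le (u : C -> C) (a b : C) (M : R) :
  ex_RInt (V:=CR) (seg_integrand u a b) 0 1 ->
  (forall t, 0 <= t <= 1 -> Cmod (u (a + RtoC t * (b - a))%C) <= M) ->
  Cmod (seg_int u a b) <= M * Cmod (b - a).
Proof.
  intros Hex HM. unfold seg_int. rewrite <- norm_CR.
  apply (norm_RInt_le (V:=C_R_NormedModule) (seg_integrand u a b) (fun _ => M * Cmod (b - a)) 0 1).
  - lra.
  - intros x Hx. rewrite norm_CR. unfold seg_integrand. rewrite Cmod_mult.
    apply Rmult_le_compat_r; [apply Cmod_ge_0 | apply HM; lra].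
  - apply (RInt_correct (V:=CR)). exact Hex.
  - pose proof (is_RInt_const (V:=R_NormedModule) 0 1 (M * Cmod (b - a))) as HC.
    assert (E : scal (1 - 0) (M * Cmod (b - a)) = M * Cmod (b - a))
      by (unfold scal; simpl; unfold mult; simpl; ring).
    exact (eq_ind _ (fun v => is_RInt (V:=R_NormedModule) (fun _ => M * Cmod (b - a)) 0 1 v) HC _ E).
Qed.

Lemma seg_int_midpoint (u : C -> C) (a b : C) :
  ex_RInt (V:=CR) (seg_integrand u a (midpoint a b)) 0 1 ->
  ex_RInt (V:=CR) (seg_integrand u (midpoint a b) b) 0 1 ->
  seg_int u a b = (seg_int u a (midpoint a b) + seg_int u (midpoint a b) b)%C.
Proof.
  intros H1 H2. unfold seg_int.
  apply (is_RInt_unique (V:=CR)).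
  apply (RInt_correct (V:=CR)) in H1. apply (RInt_correct (V:=CR)) in H2.
  apply (is_RInt_Chasles (V:=CR)) with (b := 1/2).
  - assert (H1' : is_RInt (V:=CR) (seg_integrand u a (midpoint a b)) (2 * 0 + 0) (2 * (1/2) + 0)
                    (RInt (V:=CR) (seg_integrand u a (midpoint a b)) 0 1)).
    { replace (2 * 0 + 0) with 0 by ring. replace (2 * (1/2) + 0) with 1 by field. exact H1. }
    apply (is_RInt_comp_lin (V:=CR) _ 2 0 0 (1/2)) in H1'.
    eapply is_RInt_ext; [| exact H1'].
    intros x _. unfold seg_integrand. rewrite scal_R_Cmult.
    replace (RtoC (2 * x + 0) * (midpoint a b - a))%C
      with (RtoC x * (b - a))%C by (unfold midpoint; destruct a, b; C_ext_field).
    unfold midpoint; destruct a, b. C_ext_field.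
  - assert (H2' : is_RInt (V:=CR) (seg_integrand u (midpoint a b) b) (2 * (1/2) + -1) (2 * 1 + -1)
                    (RInt (V:=CR) (seg_integrand u (midpoint a b) b) 0 1)).
    { replace (2 * (1/2) + -1) with 0 by field. replace (2 * 1 + -1) with 1 by ring. exact H2. }
    apply (is_RInt_comp_lin (V:=CR) _ 2 (-1) (1/2) 1) in H2'.
    eapply is_RInt_ext; [| exact H2'].
    intros x _. unfold seg_integrand. rewrite scal_R_Cmult.
    replace (midpoint a b + RtoC (2 * x + -1) * (b - midpoint a b))%C
      with (a + RtoC x * (b - a))%C by (unfold midpoint; destruct a, b; C_ext_field).
    unfold midpoint; destruct a, b. C_ext_field.
Qed.

Lemma seg_int_swap (u : C -> C) (a b : C) :
  ex_RInt (V:=CR) (seg_integrand u a b) 0 1 -> seg_int u b a = (- seg_int u a b)%C.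
Proof.
  intros H. unfold seg_int at 1. apply (is_RInt_unique (V:=CR)).
  apply (RInt_correct (V:=CR)) in H.
  apply (is_RInt_swap (V:=CR)) in H.
  assert (H' : is_RInt (V:=CR) (seg_integrand u a b) (-1 * 0 + 1) (-1 * 1 + 1)
                 (opp (RInt (V:=CR) (seg_integrand u a b) 0 1))).
  { replace (-1 * 0 + 1) with 1 by ring. replace (-1 * 1 + 1) with 0 by ring. exact H. }
  apply (is_RInt_comp_lin (V:=CR) _ (-1) 1 0 1) in H'.
  change (- seg_int u a b)%C with (opp (RInt (V:=CR) (seg_integrand u a b) 0 1)).
  eapply is_RInt_ext; [| exact H'].
  intros x _. unfold seg_integrand. rewrite scal_R_Cmult.
  replace (a + RtoC (-1 * x + 1) * (b - a))%C with (b + RtoC x * (a - b))%C by (destruct a, b; C_ext_field).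
  destruct a, b. C_ext_field.
Qed.

Lemma seg_int_ext (f g : C -> C) (a b : C) : (forall w, f w = g w) -> seg_int f a b = seg_int g a b.
Proof.
  intros H. unfold seg_int. apply (RInt_ext (V:=CR)). intros x _. unfold seg_integrand. rewrite H. reflexivity.
Qed.

Lemma seg_int_plus (f g : C -> C) (a b : C) :
  ex_RInt (V:=CR) (seg_integrand f a b) 0 1 -> ex_RInt (V:=CR) (seg_integrand g a b) 0 1 ->
  seg_int (fun w => f w + g w)%C a b = (seg_int f a b + seg_int g a b)%C.
Proof.
  intros Hf Hg. unfold seg_int. apply (is_RInt_unique (V:=CR)).
  apply (RInt_correct (V:=CR)) in Hf. apply (RInt_correct (V:=CR)) in Hg.
  pose proof (is_RInt_plus (V:=CR) _ _ _ _ _ _ Hf Hg) as H.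
  eapply is_RInt_ext; [|exact H]. intros x _. unfold seg_integrand. simpl. unfold plus; simpl.
  destruct (f (a + RtoC x * (b - a))%C), (g (a + RtoC x * (b - a))%C), a, b.
  apply injective_projections; simpl; unfold plus; simpl; ring.
Qed.

Lemma seg_int_primitive (P p : C -> C) (a b : C) :
  (forall t, 0 <= t <= 1 -> is_cderiv P (a + RtoC t * (b - a))%C (p (a + RtoC t * (b - a))%C)) ->
  (forall t, 0 <= t <= 1 -> ccont p (a + RtoC t * (b - a))%C) ->
  seg_int p a b = (P b - P a)%C.
Proof.
  intros HP Hp. unfold seg_int.
  apply (is_RInt_unique (V:=CR)).
  replace (P b - P a)%C with (minus (P (a + RtoC 1 * (b - a))%C) (P (a + RtoC 0 * (b - a))%C)).
  2:{ replace (a + RtoC 1 * (b - a))%C with b by ring.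
      replace (a + RtoC 0 * (b - a))%C with a by ring. reflexivity. }
  apply (is_RInt_derive (V:=CR) (fun t => P (a + RtoC t * (b - a))%C)).
  - intros t Ht. rewrite Rmin_left, Rmax_right in Ht by lra.
    apply is_rderiv_is_derive, (is_rderiv_comp P _ (fun s => a + RtoC s * (b - a))%C).
    + apply HP, Ht.
    + apply is_rderiv_line.
  - intros t Ht. rewrite Rmin_left, Rmax_right in Ht by lra.
    apply rcont_continuous, seg_integrand_rcont, Hp, Ht.
Qed.

Lemma seg_int_const (K z w : C) : seg_int (fun _ => K) z w = (K * (w - z))%C.
Proof.
  rewrite (seg_int_primitive (fun x => K * x)%C (fun _ => K)); [ring| |intros; apply ccont_const].
  intros t _ eps He. exists 1. split; [lra|]. intros x _.
  replace (K * x - K * (z + RtoC t * (w - z)) - K * (x - (z + RtoC t * (w - z))))%C with (RtoC 0) by ring.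
  rewrite Cmod_0. pose proof (Cmod_ge_0 (x - (z + RtoC t * (w - z)))). nra.
Qed.

(** * Goursat's lemma and primitives *)

Lemma geometric_cauchy_limit (x : nat -> R) (A : R) : 0 <= A ->
  (forall k, Rabs (x (S k) - x k) <= A / 2 ^ k) ->
  exists L, forall k, Rabs (x k - L) <= 2 * A / 2 ^ k.
Proof.
  intros HA Hx.
  assert (Hpow : forall k, 0 < 2 ^ k) by (intros; apply pow_lt; lra).
  assert (Hc : forall n m, Rabs (x (n + m)%nat - x n) <= 2 * A / 2 ^ n - 2 * A / 2 ^ (n + m)).
  { intros n m. induction m.
    - rewrite Nat.add_0_r. replace (x n - x n) with 0 by ring. rewrite Rabs_R0. lra.
    - replace (n + S m)%nat with (S (n + m)) by lia.
      replace (x (S (n + m)) - x n) with ((x (S (n + m)) - x (n + m)%nat) + (x (n + m)%nat - x n)) by ring.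
      eapply Rle_trans; [apply Rabs_triang|].
      specialize (Hx (n + m)%nat). simpl pow. pose proof (Hpow (n + m)%nat).
      assert (E : 2 * A / (2 * 2 ^ (n + m)) = A / 2 ^ (n + m)) by (field; lra).
      rewrite E. lra. }
  assert (Htail : forall n m, 0 <= 2 * A / 2 ^ (n + m)).
  { intros. apply Rmult_le_pos; [lra|left; apply Rinv_0_lt_compat, Hpow]. }
  assert (Hcc : Cauchy_crit x).
  { intros eps He. destruct (exists_pow2_lt (2 * A) eps He) as [N HN].
    exists N. intros n m Hn Hm. unfold R_dist.
    assert (Hgen : forall p q, (N <= p)%nat -> (p <= q)%nat -> Rabs (x q - x p) < eps).
    { intros p q Hp Hq. replace q with (p + (q - p))%nat by lia.
      eapply Rle_lt_trans; [apply Hc|].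
      assert (2 * A / 2 ^ p <= 2 * A / 2 ^ N).
      { unfold Rdiv. apply Rmult_le_compat_l; [lra|]. apply Rinv_le_contravar; [apply Hpow|].
        apply Rle_pow; [lra|lia]. }
      pose proof (Htail p (q - p)%nat). lra. }
    destruct (Nat.le_ge_cases n m).
    - rewrite Rabs_minus_sym. apply Hgen; auto.
    - apply Hgen; auto. }
  destruct (Stdlib.Reals.Rcomplete.R_complete x Hcc) as [L HL].
  exists L. intros k.
  destruct (Rle_dec (Rabs (x k - L)) (2 * A / 2 ^ k)) as [Hle|Hgt]; auto.
  exfalso. apply Rnot_le_lt in Hgt.
  destruct (HL (Rabs (x k - L) - 2 * A / 2 ^ k)) as [N HN]; [lra|].
  specialize (HN (k + N)%nat ltac:(lia)). unfold R_dist in HN.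
  specialize (Hc k N). pose proof (Htail k N).
  assert (Rabs (x k - L) <= Rabs (x k - x (k + N)%nat) + Rabs (x (k + N)%nat - L)).
  { replace (x k - L) with ((x k - x (k + N)%nat) + (x (k + N)%nat - L)) by ring. apply Rabs_triang. }
  rewrite Rabs_minus_sym in Hc. lra.
Qed.

Lemma geometric_cauchy_limit_C (x : nat -> C) (A : R) : 0 <= A ->
  (forall k, Cmod (x (S k) - x k) <= A / 2 ^ k) ->
  exists L, forall k, Cmod (x k - L) <= 4 * A / 2 ^ k.
Proof.
  intros HA Hx.
  destruct (geometric_cauchy_limit (fun k => fst (x k)) A HA) as [Lx HLx].
  { intros k. eapply Rle_trans; [|apply (Hx k)].
    pose proof (re_le_Cmod (x (S k) - x k)%C) as H.
    destruct (x (S k)), (x k). simpl in *. replace (r - r1) with (r + - r1) by ring. exact H. }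
  destruct (geometric_cauchy_limit (fun k => snd (x k)) A HA) as [Ly HLy].
  { intros k. eapply Rle_trans; [|apply (Hx k)].
    pose proof (Cmod_im (x (S k) - x k)%C) as H.
    destruct (x (S k)), (x k). simpl in *. replace (r0 - r2) with (r0 + - r2) by ring. exact H. }
  exists (Lx, Ly). intros k. eapply Rle_trans; [apply Cmod_le_sum|].
  specialize (HLx k). specialize (HLy k). simpl in HLx, HLy.
  destruct (x k). simpl in *.
  replace (r + - Lx) with (r - Lx) by ring. replace (r0 + - Ly) with (r0 - Ly) by ring.
  replace (4 * A / 2 ^ k) with (2 * A / 2 ^ k + 2 * A / 2 ^ k) by (unfold Rdiv; ring).
  lra.
Qed.

Definition tri := (C * C * C)%type.

Definition tri_int (u : C -> C) (T : tri) : C :=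
  let '(a, b, c) := T in (seg_int u a b + seg_int u b c + seg_int u c a)%C.
Definition perimeter (T : tri) : R :=
  let '(a, b, c) := T in Cmod (b - a) + Cmod (c - b) + Cmod (a - c).
Definition tri_in (rho : R) (T : tri) : Prop :=
  let '(a, b, c) := T in Cmod a <= rho /\ Cmod b <= rho /\ Cmod c <= rho.
Definition apex (T : tri) : C := let '(a, _, _) := T in a.

(* The four triangles of the midpoint subdivision; the fourth is the middle one, with reversed orientation. *)
Definition subtri (T : tri) (i : nat) : tri :=
  let '(a, b, c) := T in
  match i with
  | O => (a, midpoint a b, midpoint c a)
  | 1%nat => (midpoint a b, b, midpoint b c)
  | 2%nat => (midpoint c a, midpoint b c, c)
  | _ => (midpoint a b, midpoint b c, midpoint c a)
  end.

Lemma tri_int_affine (A l : C) (T : tri) : tri_int (fun w => A + l * w)%C T = 0%C.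
Proof.
  destruct T as [[a b] c]. unfold tri_int.
  set (P := (fun w => A * w + l * w * w / 2)%C).
  assert (H : forall p q, seg_int (fun w => A + l * w)%C p q = (P q - P p)%C).
  { intros p q. apply seg_int_primitive; intros t _; [apply is_cderiv_quadratic|apply ccont_affine]. }
  rewrite !H. ring.
Qed.

Lemma tri_in_subtri (rho : R) (T : tri) (i : nat) : tri_in rho T -> tri_in rho (subtri T i).
Proof.
  destruct T as [[a b] c]. simpl. intros [Ha [Hb Hc]].
  destruct i as [|[|[|i]]]; simpl; repeat split; auto; apply midpoint_in; auto.
Qed.

Lemma tri_int_subtri (u : C -> C) (rho : R) (T : tri) :
  (forall z, Cmod z <= rho -> ccont u z) -> tri_in rho T ->
  tri_int u T = (tri_int u (subtri T 0) + tri_int u (subtri T 1)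
                 + tri_int u (subtri T 2) + tri_int u (subtri T 3))%C.
Proof.
  destruct T as [[a b] c]. simpl. intros Hc [Ha [Hb Hcc]].
  pose proof (midpoint_in a b rho Ha Hb).
  pose proof (midpoint_in b c rho Hb Hcc).
  pose proof (midpoint_in c a rho Hcc Ha).
  rewrite (seg_int_midpoint u a b), (seg_int_midpoint u b c), (seg_int_midpoint u c a),
    (seg_int_swap u (midpoint a b) (midpoint c a)), (seg_int_swap u (midpoint b c) (midpoint a b)),
    (seg_int_swap u (midpoint c a) (midpoint b c)) by (apply (ex_seg_int_in u rho); auto).
  ring.
Qed.

Lemma Cmod_half (z : C) : Cmod (RtoC (1/2) * z) = Cmod z / 2.
Proof. rewrite Cmod_RtoC_mult, Rabs_right by lra. field. Qed.

Lemma perimeter_subtri (T : tri) (i : nat) : perimeter (subtri T i) = perimeter T / 2.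
Proof.
  destruct T as [[a b] c]. unfold perimeter, subtri.
  destruct i as [|[|[|i]]].
  - replace (midpoint a b - a)%C with (RtoC (1/2) * (b - a))%C by (destruct a, b; unfold midpoint; C_ext_field).
    replace (midpoint c a - midpoint a b)%C with (RtoC (1/2) * (c - b))%C by (destruct a, b, c; unfold midpoint; C_ext_field).
    replace (a - midpoint c a)%C with (RtoC (1/2) * (a - c))%C by (destruct a, c; unfold midpoint; C_ext_field).
    rewrite !Cmod_half. field.
  - replace (b - midpoint a b)%C with (RtoC (1/2) * (b - a))%C by (destruct a, b; unfold midpoint; C_ext_field).
    replace (midpoint b c - b)%C with (RtoC (1/2) * (c - b))%C by (destruct b, c; unfold midpoint; C_ext_field).
    replace (midpoint a b - midpoint b c)%C with (RtoC (1/2) * (a - c))%C by (destruct a, b, c; unfold midpoint; C_ext_field).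
    rewrite !Cmod_half. field.
  - replace (midpoint b c - midpoint c a)%C with (RtoC (1/2) * (b - a))%C by (destruct a, b, c; unfold midpoint; C_ext_field).
    replace (c - midpoint b c)%C with (RtoC (1/2) * (c - b))%C by (destruct b, c; unfold midpoint; C_ext_field).
    replace (midpoint c a - c)%C with (RtoC (1/2) * (a - c))%C by (destruct a, c; unfold midpoint; C_ext_field).
    rewrite !Cmod_half. field.
  - replace (midpoint b c - midpoint a b)%C with (RtoC (1/2) * (c - a))%C by (destruct a, b, c; unfold midpoint; C_ext_field).
    replace (midpoint c a - midpoint b c)%C with (RtoC (1/2) * (a - b))%C by (destruct a, b, c; unfold midpoint; C_ext_field).
    replace (midpoint a b - midpoint c a)%C with (RtoC (1/2) * (b - c))%C by (destruct a, b, c; unfold midpoint; C_ext_field).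
    rewrite !Cmod_half, (Cmod_sub_sym c a), (Cmod_sub_sym a b), (Cmod_sub_sym b c). field.
Qed.

Lemma perimeter_ge_0 (T : tri) : 0 <= perimeter T.
Proof.
  destruct T as [[a b] c]. simpl.
  pose proof (Cmod_ge_0 (b - a)). pose proof (Cmod_ge_0 (c - b)). pose proof (Cmod_ge_0 (a - c)). lra.
Qed.

Lemma apex_subtri (T : tri) (i : nat) : Cmod (apex (subtri T i) - apex T) <= perimeter T.
Proof.
  destruct T as [[a b] c]. unfold apex, subtri, perimeter.
  pose proof (Cmod_ge_0 (b - a)). pose proof (Cmod_ge_0 (c - b)). pose proof (Cmod_ge_0 (a - c)).
  destruct i as [|[|[|i]]].
  - replace (a - a)%C with (RtoC 0) by ring. rewrite Cmod_0. lra.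
  - replace (midpoint a b - a)%C with (RtoC (1/2) * (b - a))%C by (destruct a, b; unfold midpoint; C_ext_field).
    rewrite Cmod_half. lra.
  - replace (midpoint c a - a)%C with (RtoC (1/2) * (c - a))%C by (destruct a, c; unfold midpoint; C_ext_field).
    rewrite Cmod_half, Cmod_sub_sym. lra.
  - replace (midpoint a b - a)%C with (RtoC (1/2) * (b - a))%C by (destruct a, b; unfold midpoint; C_ext_field).
    rewrite Cmod_half. lra.
Qed.

Lemma edges_near_apex (T : tri) (t : R) : 0 <= t <= 1 ->
  let '(a, b, c) := T in
  Cmod (a + RtoC t * (b - a) - a) <= perimeter T /\ Cmod (b + RtoC t * (c - b) - a) <= perimeter T /\
  Cmod (c + RtoC t * (a - c) - a) <= perimeter T.
Proof.
  intros Ht. destruct T as [[a b] c]. unfold perimeter.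
  pose proof (Cmod_ge_0 (b - a)). pose proof (Cmod_ge_0 (c - b)). pose proof (Cmod_ge_0 (a - c)).
  pose proof (Rabs_right t ltac:(lra)) as Rt.
  assert (t * Cmod (b - a) <= Cmod (b - a)) by nra.
  assert (t * Cmod (c - b) <= Cmod (c - b)) by nra.
  assert ((1 - t) * Cmod (a - c) <= Cmod (a - c)) by nra.
  repeat split.
  - replace (a + RtoC t * (b - a) - a)%C with (RtoC t * (b - a))%C by ring.
    rewrite Cmod_RtoC_mult, Rt. lra.
  - replace (b + RtoC t * (c - b) - a)%C with ((b - a) + RtoC t * (c - b))%C by ring.
    eapply Rle_trans; [apply Cmod_triangle|]. rewrite Cmod_RtoC_mult, Rt. lra.
  - replace (c + RtoC t * (a - c) - a)%C with (RtoC (1 - t) * (c - a))%C by (rewrite RtoC_minus; ring).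
    rewrite Cmod_RtoC_mult, Rabs_right by lra. rewrite (Cmod_sub_sym c a). lra.
Qed.

Lemma tri_int_le_of_affine_approx (u : C -> C) (rho : R) (T : tri) (A l : C) (c : R) :
  (forall z, Cmod z <= rho -> ccont u z) -> tri_in rho T ->
  (forall w, Cmod (w - apex T) <= perimeter T -> Cmod (u w - (A + l * w)) <= c) ->
  Cmod (tri_int u T) <= c * perimeter T.
Proof.
  intros Hc HT Happ.
  set (v := (fun w => A + l * w)%C). set (e := (fun w => u w - v w)%C).
  assert (Hec : forall z, Cmod z <= rho -> ccont e z) by (intros; apply ccont_minus; [auto|apply ccont_affine]).
  assert (Hsplit : forall x y, Cmod x <= rho -> Cmod y <= rho -> seg_int u x y = (seg_int e x y + seg_int v x y)%C).
  { intros x y Hx Hy. rewrite <- seg_int_plus.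
    - apply seg_int_ext. intros w. unfold e. ring.
    - apply (ex_seg_int_in e rho); auto.
    - apply ex_seg_int. intros t Ht. apply ccont_affine. }
  pose proof (tri_int_affine A l T) as Hv. fold v in Hv.
  pose proof (fun t Ht => edges_near_apex T t Ht) as Hedge.
  destruct T as [[a b] c']. simpl in HT, Hv, Hedge, Happ |- *. destruct HT as [Ha [Hb Hc']].
  assert (Hbnd : forall x y, Cmod x <= rho -> Cmod y <= rho ->
            (forall t, 0 <= t <= 1 -> Cmod (x + RtoC t * (y - x) - a) <= perimeter (a, b, c')) ->
            Cmod (seg_int e x y) <= c * Cmod (y - x)).
  { intros x y Hx Hy Hxy. apply seg_int_norm_le; [apply (ex_seg_int_in e rho); auto|].
    intros t Ht. apply Happ, Hxy, Ht. }
  rewrite (Hsplit a b), (Hsplit b c'), (Hsplit c' a) by auto.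
  replace (seg_int e a b + seg_int v a b + (seg_int e b c' + seg_int v b c') + (seg_int e c' a + seg_int v c' a))%C
    with (seg_int e a b + seg_int e b c' + seg_int e c' a + (seg_int v a b + seg_int v b c' + seg_int v c' a))%C by ring.
  rewrite Hv, Cplus_0_r.
  pose proof (Hbnd a b Ha Hb (fun t Ht => proj1 (Hedge t Ht))).
  pose proof (Hbnd b c' Hb Hc' (fun t Ht => proj1 (proj2 (Hedge t Ht)))).
  pose proof (Hbnd c' a Hc' Ha (fun t Ht => proj2 (proj2 (Hedge t Ht)))).
  eapply Rle_trans; [apply Cmod_triangle|].
  eapply Rle_trans; [apply Rplus_le_compat_r; apply Cmod_triangle|].
  simpl. rewrite !Rmult_plus_distr_l. lra.
Qed.

Section Goursat.

Variable u : C -> C.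
Variable rho : R.
Hypothesis u_deriv : forall z, Cmod z <= rho -> exists l, is_cderiv u z l.

Let u_cont (z : C) (Hz : Cmod z <= rho) : ccont u z.
Proof. destruct (u_deriv z Hz) as [l Hl]. exact (is_cderiv_ccont u z l Hl). Qed.

Definition goursat_step (T : tri) : tri :=
  if Rle_dec (Cmod (tri_int u T) / 4) (Cmod (tri_int u (subtri T 0))) then subtri T 0 else
  if Rle_dec (Cmod (tri_int u T) / 4) (Cmod (tri_int u (subtri T 1))) then subtri T 1 else
  if Rle_dec (Cmod (tri_int u T) / 4) (Cmod (tri_int u (subtri T 2))) then subtri T 2 else subtri T 3.

Lemma goursat_step_subtri (T : tri) : exists i, goursat_step T = subtri T i.
Proof.
  unfold goursat_step. destruct Rle_dec; [eauto|]. destruct Rle_dec; [eauto|]. destruct Rle_dec; eauto.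
Qed.

Lemma tri_int_goursat_step (T : tri) :
  tri_in rho T -> Cmod (tri_int u T) <= 4 * Cmod (tri_int u (goursat_step T)).
Proof.
  intros HT. unfold goursat_step.
  destruct Rle_dec as [H0|H0]; [lra|].
  destruct Rle_dec as [H1|H1]; [lra|].
  destruct Rle_dec as [H2|H2]; [lra|].
  destruct (Rle_dec (Cmod (tri_int u T) / 4) (Cmod (tri_int u (subtri T 3)))) as [H3|H3]; [lra|].
  exfalso. rewrite (tri_int_subtri u rho T u_cont HT) in H0, H1, H2, H3.
  set (S := (tri_int u (subtri T 0) + tri_int u (subtri T 1)
             + tri_int u (subtri T 2) + tri_int u (subtri T 3))%C) in *.
  assert (Cmod S <= Cmod (tri_int u (subtri T 0)) + Cmod (tri_int u (subtri T 1))
                    + Cmod (tri_int u (subtri T 2)) + Cmod (tri_int u (subtri T 3))).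
  { unfold S. eapply Rle_trans; [apply Cmod_triangle|].
    eapply Rle_trans; [apply Rplus_le_compat_r; apply Cmod_triangle|].
    eapply Rle_trans; [apply Rplus_le_compat_r; apply Rplus_le_compat_r; apply Cmod_triangle|]. lra. }
  lra.
Qed.

Fixpoint goursat_seq (T : tri) (k : nat) : tri :=
  match k with O => T | S k' => goursat_step (goursat_seq T k') end.

Variable T : tri.
Hypothesis T_in : tri_in rho T.

Lemma goursat_seq_in (k : nat) : tri_in rho (goursat_seq T k).
Proof.
  induction k as [|k IH]; [exact T_in|]. simpl.
  destruct (goursat_step_subtri (goursat_seq T k)) as [i ->]. apply tri_in_subtri, IH.
Qed.

Lemma goursat_seq_perimeter (k : nat) : perimeter (goursat_seq T k) = perimeter T / 2 ^ k.
Proof.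
  induction k as [|k IH]; simpl.
  - field.
  - destruct (goursat_step_subtri (goursat_seq T k)) as [i ->].
    rewrite perimeter_subtri, IH. field. apply pow_nonzero. lra.
Qed.

Lemma tri_int_goursat_seq (k : nat) :
  Cmod (tri_int u T) <= (2 ^ k) ^ 2 * Cmod (tri_int u (goursat_seq T k)).
Proof.
  induction k as [|k IH]; [simpl; lra|].
  pose proof (tri_int_goursat_step _ (goursat_seq_in k)) as Hs.
  assert (0 < 2 ^ k) by (apply pow_lt; lra).
  change (goursat_seq T (S k)) with (goursat_step (goursat_seq T k)). simpl pow in *. nra.
Qed.

Lemma goursat_seq_apex_limit :
  exists zs, Cmod zs <= rho /\
    forall k, Cmod (apex (goursat_seq T k) - zs) <= 4 * perimeter T / 2 ^ k.
Proof.
  destruct (geometric_cauchy_limit_C (fun k => apex (goursat_seq T k)) (perimeter T) (perimeter_ge_0 T))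
    as [zs Hzs].
  { intros k. simpl. destruct (goursat_step_subtri (goursat_seq T k)) as [i ->].
    rewrite <- goursat_seq_perimeter. apply apex_subtri. }
  exists zs. split; [|exact Hzs].
  destruct (Rle_dec (Cmod zs) rho) as [|Hn]; auto. exfalso. apply Rnot_le_lt in Hn.
  destruct (exists_pow2_lt (4 * perimeter T) (Cmod zs - rho)) as [k Hk]; [lra|].
  specialize (Hzs k).
  assert (Cmod (apex (goursat_seq T k)) <= rho).
  { pose proof (goursat_seq_in k) as Hin. destruct (goursat_seq T k) as [[p q] r]. simpl in *. tauto. }
  pose proof (Cmod_triangle_inv zs (apex (goursat_seq T k) - zs)).
  replace (zs + (apex (goursat_seq T k) - zs))%C with (apex (goursat_seq T k)) in * by ring.
  lra.
Qed.

(* Near the limit point zs, u is affine up to [eps |w - zs|]; the triangles shrink fast enough that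
   the bound [4^k * eps * (P/2^k)^2] is independent of k. *)
Theorem goursat : tri_int u T = 0%C.
Proof.
  destruct goursat_seq_apex_limit as [zs [Hzs Hlim]].
  destruct (u_deriv zs Hzs) as [l Hl].
  pose proof (perimeter_ge_0 T) as HP. set (P := perimeter T) in *.
  assert (Hsmall : forall eps, 0 < eps -> Cmod (tri_int u T) <= 5 * eps * P ^ 2).
  { intros eps Heps.
    destruct (Hl eps Heps) as [del [Hdel Hdl]].
    destruct (exists_pow2_lt (5 * P) del Hdel) as [k Hk].
    assert (Hpk : 0 < 2 ^ k) by (apply pow_lt; lra).
    set (Pk := P / 2 ^ k).
    assert (HPk : 0 <= Pk) by (unfold Pk; apply Rmult_le_pos; auto; left; apply Rinv_0_lt_compat, Hpk).
    assert (Happ : Cmod (tri_int u (goursat_seq T k)) <= eps * (5 * Pk) * Pk).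
    { replace (eps * (5 * Pk) * Pk) with (eps * (5 * Pk) * perimeter (goursat_seq T k))
        by (rewrite goursat_seq_perimeter; reflexivity).
      apply (tri_int_le_of_affine_approx u rho _ (u zs - l * zs) l); [exact u_cont|apply goursat_seq_in|].
      intros w Hw. rewrite goursat_seq_perimeter in Hw. fold P Pk in Hw.
      assert (Hwz : Cmod (w - zs) <= 5 * Pk).
      { replace (w - zs)%C with ((w - apex (goursat_seq T k)) + (apex (goursat_seq T k) - zs))%C by ring.
        eapply Rle_trans; [apply Cmod_triangle|]. specialize (Hlim k).
        replace (4 * P / 2 ^ k) with (4 * Pk) in Hlim by (unfold Pk, Rdiv; ring). lra. }
      replace (u w - (u zs - l * zs + l * w))%C with (u w - u zs - l * (w - zs))%C by ring.
      eapply Rle_trans; [apply Hdl|apply Rmult_le_compat_l; lra].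
      eapply Rle_lt_trans; [exact Hwz|]. unfold Pk. replace (5 * (P / 2 ^ k)) with (5 * P / 2 ^ k) by (unfold Rdiv; ring).
      exact Hk. }
    eapply Rle_trans; [apply (tri_int_goursat_seq k)|].
    replace (5 * eps * P ^ 2) with ((2 ^ k) ^ 2 * (eps * (5 * Pk) * Pk)) by (unfold Pk; field; lra).
    apply Rmult_le_compat_l; [nra|exact Happ]. }
  apply Cmod_eq_0. apply Rle_antisym; [|apply Cmod_ge_0].
  apply Rnot_lt_le. intros Hpos.
  set (eps := Cmod (tri_int u T) / (5 * P ^ 2 + 1)).
  assert (Heps : 0 < eps) by (unfold eps; apply Rdiv_lt_0_compat; nra).
  specialize (Hsmall eps Heps).
  assert (5 * eps * P ^ 2 < Cmod (tri_int u T)).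
  { unfold eps. apply Rmult_lt_reg_r with (r := 5 * P ^ 2 + 1); [nra|].
    replace (5 * (Cmod (tri_int u T) / (5 * P ^ 2 + 1)) * P ^ 2 * (5 * P ^ 2 + 1))
      with (5 * P ^ 2 * Cmod (tri_int u T)) by (field; nra). nra. }
  lra.
Qed.

End Goursat.

Section Primitive.

Variable u : C -> C.
Variable rho : R.
Hypothesis u_deriv : forall z, Cmod z <= rho -> exists l, is_cderiv u z l.

Let u_cont (z : C) (Hz : Cmod z <= rho) : ccont u z.
Proof. destruct (u_deriv z Hz) as [l Hl]. exact (is_cderiv_ccont u z l Hl). Qed.

Definition cprimitive (z : C) : C := seg_int u 0 z.

Lemma cprimitive_sub (a b : C) : Cmod a <= rho -> Cmod b <= rho ->
  (cprimitive b - cprimitive a)%C = seg_int u a b.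
Proof.
  intros Ha Hb. unfold cprimitive.
  assert (H0 : Cmod (RtoC 0) <= rho) by (rewrite Cmod_0; pose proof (Cmod_ge_0 a); lra).
  pose proof (goursat u rho u_deriv (RtoC 0, a, b) (conj H0 (conj Ha Hb))) as G. simpl in G.
  rewrite (seg_int_swap u 0 b) in G by (apply (ex_seg_int_in u rho); auto).
  apply Ceq_minus.
  replace (seg_int u 0 b - seg_int u 0 a - seg_int u a b)%C
    with (- (seg_int u 0 a + seg_int u a b + - seg_int u 0 b))%C by ring.
  rewrite G. ring.
Qed.

Lemma cprimitive_lipschitz (a b : C) (M : R) : Cmod a <= rho -> Cmod b <= rho ->
  (forall z, Cmod z <= rho -> Cmod (u z) <= M) -> Cmod (cprimitive b - cprimitive a) <= M * Cmod (b - a).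
Proof.
  intros Ha Hb HM. rewrite cprimitive_sub by auto. apply seg_int_norm_le.
  - apply (ex_seg_int_in u rho); auto.
  - intros t Ht. apply HM, cdisk_convex; auto.
Qed.

Lemma is_cderiv_cprimitive (z : C) : Cmod z < rho -> is_cderiv cprimitive z (u z).
Proof.
  intros Hz eps He.
  destruct (u_cont z (Rlt_le _ _ Hz) (eps / 2)) as [d [Hdp Hdz]]; [lra|].
  exists (Rmin d (rho - Cmod z)). split; [apply Rmin_pos; lra|].
  intros w Hw.
  assert (Hw1 : Cmod (w - z) < d) by (eapply Rlt_le_trans; [exact Hw|apply Rmin_l]).
  assert (Hw2 : Cmod (w - z) < rho - Cmod z) by (eapply Rlt_le_trans; [exact Hw|apply Rmin_r]).
  assert (Hwr : Cmod w <= rho).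
  { replace w with (z + (w - z))%C by ring. eapply Rle_trans; [apply Cmod_triangle|]. lra. }
  rewrite cprimitive_sub, <- (seg_int_const (u z) z w) by lra.
  assert (Hcu : forall t, 0 <= t <= 1 -> ccont (fun x => u x - u z)%C (z + RtoC t * (w - z))%C).
  { intros t Ht. apply ccont_minus; [apply u_cont, cdisk_convex|apply ccont_const]; lra. }
  replace (seg_int u z w - seg_int (fun _ => u z) z w)%C with (seg_int (fun x => u x - u z)%C z w).
  2:{ rewrite (seg_int_ext _ (fun x => u x + (fun _ => - u z) x)%C) by (intros; ring).
      rewrite seg_int_plus, !seg_int_const; [ring| |].
      - apply (ex_seg_int_in u rho); [exact u_cont|lra|lra].
      - apply ex_seg_int. intros; apply ccont_const. }
  eapply Rle_trans.
  - apply seg_int_norm_le with (M := eps / 2); [apply ex_seg_int, Hcu|].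
    intros t Ht. left. apply Hdz.
    replace (z + RtoC t * (w - z) - z)%C with (RtoC t * (w - z))%C by ring.
    rewrite Cmod_RtoC_mult, Rabs_right by lra. pose proof (Cmod_ge_0 (w - z)). nra.
  - pose proof (Cmod_ge_0 (w - z)). nra.
Qed.

End Primitive.

(** * Integrals over circles and the Cauchy estimate *)

Lemma is_rderiv_pair (f g : R -> R) (t f' g' : R) :
  derivable_pt_lim f t f' -> derivable_pt_lim g t g' -> is_rderiv (fun s => (f s, g s)) t (f', g').
Proof.
  intros Hf Hg eps He.
  destruct (Hf (eps / 2)) as [d1 Hd1]; [lra|].
  destruct (Hg (eps / 2)) as [d2 Hd2]; [lra|].
  exists (Rmin d1 d2). split; [apply Rmin_pos; apply cond_pos|].
  intros h Hh.
  destruct (Req_dec h 0) as [H0|H0].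
  { subst. rewrite Rplus_0_r. replace ((f t, g t) - (f t, g t) - RtoC 0 * (f', g'))%C with (RtoC 0) by C_ext_field.
    rewrite Cmod_0, Rabs_R0. lra. }
  assert (Hh1 : Rabs h < d1) by (eapply Rlt_le_trans; [exact Hh|apply Rmin_l]).
  assert (Hh2 : Rabs h < d2) by (eapply Rlt_le_trans; [exact Hh|apply Rmin_r]).
  specialize (Hd1 h H0 Hh1). specialize (Hd2 h H0 Hh2).
  eapply Rle_trans; [apply Cmod_le_sum|]. simpl.
  assert (E : forall a b c k : R, Rabs ((a - b) / h - c) < eps / 2 -> Rabs (a + - b + - (h * c - 0 * k)) <= eps / 2 * Rabs h).
  { intros a b c k Habc. replace (a + - b + - (h * c - 0 * k)) with (h * ((a - b) / h - c)) by (field; auto).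
    rewrite Rabs_mult. pose proof (Rabs_pos h). nra. }
  assert (E' : forall a b c k : R, Rabs ((a - b) / h - c) < eps / 2 -> Rabs (a + - b + - (h * c + 0 * k)) <= eps / 2 * Rabs h).
  { intros a b c k Habc. replace (a + - b + - (h * c + 0 * k)) with (h * ((a - b) / h - c)) by (field; auto).
    rewrite Rabs_mult. pose proof (Rabs_pos h). nra. }
  pose proof (E _ _ _ g' Hd1). pose proof (E' _ _ _ f' Hd2). lra.
Qed.

Definition expi (th : R) : C := (cos th, sin th).
Definition expmi (th : R) : C := (cos th, - sin th).

Lemma is_rderiv_expi (th : R) : is_rderiv expi th (Ci * expi th)%C.
Proof.
  replace (Ci * expi th)%C with ((- sin th, cos th) : C) by (unfold expi, Ci; C_ext_field).
  apply is_rderiv_pair; [apply derivable_pt_lim_cos|apply derivable_pt_lim_sin].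
Qed.

Lemma is_rderiv_expmi (th : R) : is_rderiv expmi th (- Ci * expmi th)%C.
Proof.
  replace (- Ci * expmi th)%C with ((- sin th, - cos th) : C) by (unfold expmi, Ci; C_ext_field).
  apply is_rderiv_pair; [apply derivable_pt_lim_cos|].
  apply derivable_pt_lim_opp. apply derivable_pt_lim_sin.
Qed.

Lemma expi_expmi (th : R) : (expi th * expmi th)%C = RtoC 1.
Proof. unfold expi, expmi. pose proof (sin2_cos2 th). unfold Rsqr in H. apply injective_projections; simpl; nra. Qed.

Lemma Cmod_expi (th : R) : Cmod (expi th) = 1.
Proof. unfold expi, Cmod; simpl. pose proof (sin2_cos2 th). unfold Rsqr in H.
  replace (cos th * (cos th * 1) + sin th * (sin th * 1)) with 1 by lra. apply sqrt_1. Qed.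

Lemma Cmod_expmi (th : R) : Cmod (expmi th) = 1.
Proof. unfold expmi, Cmod; simpl. pose proof (sin2_cos2 th). unfold Rsqr in H.
  replace (cos th * (cos th * 1) + - sin th * (- sin th * 1)) with 1 by lra. apply sqrt_1. Qed.

Lemma is_RInt_Cmult (f : R -> C) (a b : R) (l c : C) :
  is_RInt (V:=CR) f a b l -> is_RInt (V:=CR) (fun t => c * f t)%C a b (c * l)%C.
Proof.
  intros H.
  pose proof (is_RInt_fct_extend_fst (U:=R_NormedModule) (V:=R_NormedModule) f a b l H) as H1.
  pose proof (is_RInt_fct_extend_snd (U:=R_NormedModule) (V:=R_NormedModule) f a b l H) as H2.
  replace (c * l)%C with ((fst c * fst l - snd c * snd l, fst c * snd l + snd c * fst l) : C)
    by (destruct c, l; C_ext_field).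
  apply (is_RInt_fct_extend_pair (U:=R_NormedModule) (V:=R_NormedModule)).
  - pose proof (is_RInt_minus (V:=R_NormedModule) _ _ _ _ _ _ (is_RInt_scal _ _ _ (fst c) _ H1) (is_RInt_scal _ _ _ (snd c) _ H2)) as H3.
    eapply is_RInt_ext; [|exact H3]. intros x _. simpl. destruct c, (f x). simpl.
    unfold minus, plus, opp, scal, mult; simpl; unfold mult; simpl. ring.
  - pose proof (is_RInt_plus (V:=R_NormedModule) _ _ _ _ _ _ (is_RInt_scal _ _ _ (fst c) _ H2) (is_RInt_scal _ _ _ (snd c) _ H1)) as H3.
    eapply is_RInt_ext; [|exact H3]. intros x _. simpl. destruct c, (f x). simpl.
    unfold minus, plus, opp, scal, mult; simpl; unfold mult; simpl. ring.
Qed.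

Lemma is_RInt_Cplus (f g : R -> C) (a b : R) (lf lg : C) :
  is_RInt (V:=CR) f a b lf -> is_RInt (V:=CR) g a b lg -> is_RInt (V:=CR) (fun t => f t + g t)%C a b (lf + lg)%C.
Proof.
  intros Hf Hg. pose proof (is_RInt_plus (V:=CR) _ _ _ _ _ _ Hf Hg) as H.
  replace (lf + lg)%C with (plus (G:=CR) lf lg) by (apply injective_projections; reflexivity).
  eapply is_RInt_ext; [|exact H]. intros x _. apply injective_projections; reflexivity.
Qed.

Lemma is_RInt_C_unique (f : R -> C) (a b : R) (l1 l2 : C) :
  is_RInt (V:=CR) f a b l1 -> is_RInt (V:=CR) f a b l2 -> l1 = l2.
Proof. intros H1 H2. apply (is_RInt_unique (V:=CR)) in H1. apply (is_RInt_unique (V:=CR)) in H2. congruence. Qed.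

Lemma expi_2PI : expi (2 * PI) = expi 0.
Proof. unfold expi. rewrite cos_2PI, sin_2PI, cos_0, sin_0. reflexivity. Qed.
Lemma expmi_2PI : expmi (2 * PI) = expmi 0.
Proof. unfold expmi. rewrite cos_2PI, sin_2PI, cos_0, sin_0. reflexivity. Qed.

Lemma Cmod_circle_le (y : C) (s th : R) : Cmod (y + RtoC s * expi th) <= Cmod y + Rabs s.
Proof. eapply Rle_trans; [apply Cmod_triangle|]. rewrite Cmod_RtoC_mult, Cmod_expi. lra. Qed.

Lemma rcont_expi (th : R) : rcont expi th.
Proof. eapply is_rderiv_rcont. apply is_rderiv_expi. Qed.
Lemma rcont_expmi (th : R) : rcont expmi th.
Proof. eapply is_rderiv_rcont. apply is_rderiv_expmi. Qed.

Lemma rcont_circle (v : C -> C) (rho : R) (y : C) (s th : R) :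
  (forall z, Cmod z < rho -> ccont v z) -> Cmod y + Rabs s < rho ->
  rcont (fun t => v (y + RtoC s * expi t))%C th.
Proof.
  intros Hv Hs. apply rcont_comp.
  - apply Hv. eapply Rle_lt_trans; [apply Cmod_circle_le|exact Hs].
  - eapply is_rderiv_rcont. apply is_rderiv_affine. apply is_rderiv_expi.
Qed.

(* In practice pi is fst or snd: this reduces complex-valued parametric integrals to
   Coquelicot's real-valued ones. *)
Record Rfunctional (pi : C -> R) : Prop := {
  pi_sub : forall z w, pi (z - w)%C = pi z - pi w;
  pi_scal : forall (r : R) z, pi (RtoC r * z)%C = r * pi z;
  pi_bnd : forall z, Rabs (pi z) <= Cmod z }.

Lemma Rfunctional_fst : Rfunctional fst.
Proof. split. - intros [] []; simpl; ring. - intros r []; simpl; ring. - apply re_le_Cmod. Qed.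

Lemma Rfunctional_snd : Rfunctional snd.
Proof. split. - intros [] []; simpl; ring. - intros r []; simpl; ring. - apply Cmod_im. Qed.

Lemma Rfunctional_decomp (pi : C -> R) : Rfunctional pi ->
  forall z, pi z = fst z * pi (RtoC 1) + snd z * pi Ci.
Proof.
  intros [Hsub Hsc _] [a b].
  replace ((a, b) : C) with (RtoC a * RtoC 1 - RtoC (- b) * Ci)%C by (unfold Ci; C_ext_field).
  rewrite Hsub, !Hsc. simpl. ring.
Qed.

Lemma is_RInt_Rfunctional (pi : C -> R) (f : R -> C) (a b : R) (l : C) :
  Rfunctional pi -> is_RInt (V:=CR) f a b l -> is_RInt (fun t => pi (f t)) a b (pi l).
Proof.
  intros Hp H.
  pose proof (is_RInt_fct_extend_fst (U:=R_NormedModule) (V:=R_NormedModule) _ _ _ _ H) as H1.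
  pose proof (is_RInt_fct_extend_snd (U:=R_NormedModule) (V:=R_NormedModule) _ _ _ _ H) as H2.
  pose proof (is_RInt_plus (V:=R_NormedModule) _ _ _ _ _ _
    (is_RInt_scal _ _ _ (pi (RtoC 1)) _ H1) (is_RInt_scal _ _ _ (pi Ci) _ H2)) as H3.
  rewrite (Rfunctional_decomp pi Hp l).
  replace (fst l * pi (RtoC 1) + snd l * pi Ci) with
    (plus (scal (pi (RtoC 1)) (fst l)) (scal (pi Ci) (snd l))) by
    (unfold plus, scal; simpl; unfold mult; simpl; ring).
  eapply is_RInt_ext; [|exact H3]. intros x _. rewrite (Rfunctional_decomp pi Hp (f x)).
  unfold plus, scal; simpl; unfold mult; simpl; ring.
Qed.

Lemma continuous_Rfunctional_comp (pi : C -> R) (g : R -> C) (t : R) :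
  Rfunctional pi -> rcont g t -> @continuous R_UniformSpace R_UniformSpace (fun s => pi (g s)) t.
Proof.
  intros Hp H. apply (filterlim_locally (T:=R_UniformSpace) (U:=R_UniformSpace)). intros eps.
  destruct (H eps (cond_pos eps)) as [d [Hd Hs]].
  exists (mkposreal d Hd). intros s Hst. simpl in Hst. specialize (Hs s Hst).
  unfold ball; simpl; unfold AbsRing_ball, minus, plus, opp; simpl; unfold abs; simpl.
  eapply Rle_lt_trans; [|exact Hs]. replace (pi (g s) + - pi (g t)) with (pi (g s) - pi (g t)) by ring.
  rewrite <- (pi_sub _ Hp). apply (pi_bnd _ Hp).
Qed.

Lemma is_derive_Rfunctional_comp (pi : C -> R) (g : R -> C) (t : R) (d : C) :
  Rfunctional pi -> is_rderiv g t d -> is_derive (fun s => pi (g s)) t (pi d).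
Proof.
  intros Hp H. apply is_derive_Reals. intros eps He.
  destruct (H (eps / 2)) as [del [Hdel Hh]]; [lra|].
  exists (mkposreal del Hdel). intros h Hh0 Hhd. simpl in Hhd.
  specialize (Hh h Hhd).
  assert (E : (pi (g (t + h)) - pi (g t)) / h - pi d = (pi (g (t + h)%R - g t - RtoC h * d)%C) / h).
  { rewrite !(pi_sub _ Hp), (pi_scal _ Hp). field. auto. }
  rewrite E. unfold Rdiv. rewrite Rabs_mult, Rabs_inv.
  pose proof (pi_bnd _ Hp (g (t + h)%R - g t - RtoC h * d)%C).
  assert (0 < Rabs h) by (apply Rabs_pos_lt; auto).
  apply Rmult_lt_reg_r with (r := Rabs h); auto.
  rewrite Rmult_assoc, Rinv_l by lra. nra.
Qed.

Lemma linear_of_eq_mul_derive (P D : R -> R) (sig : R) :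
  (forall s, Rabs s < sig -> is_derive P s (D s)) ->
  (forall s, Rabs s < sig -> P s = s * D s) ->
  forall r, 0 < r < sig -> P r = r * D 0.
Proof.
  intros HD HP r Hr.
  set (g := fun s => P s / s).
  assert (Hg : forall s, 0 < s < sig -> is_derive g s 0).
  { intros s Hs. unfold g.
    assert (Hs' : Rabs s < sig) by (rewrite Rabs_right; lra).
    pose proof (is_derive_div P (fun t => t) s (D s) 1 (HD s Hs') (is_derive_id s) ltac:(lra)) as H.
    replace 0 with ((D s * s - P s * 1) / s ^ 2) at 1. exact H.
    rewrite (HP s Hs'). field. lra. }
  assert (Hconst : forall s, 0 < s < sig -> g s = g r).
  { intros s Hs.
    destruct (MVT_gen g s r (fun _ => 0)) as [c [Hc Hc2]].
    - intros x Hx. apply Hg. split.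
      + eapply Rle_lt_trans; [|apply Hx]. apply Rmin_case; lra.
      + eapply Rlt_le_trans; [apply Hx|]. apply Rmax_case; lra.
    - intros x Hx. apply continuity_pt_filterlim. apply (ex_derive_continuous (K:=R_AbsRing) (V:=R_NormedModule)).
      eexists. apply Hg. split.
      + eapply Rlt_le_trans; [|apply Hx]. apply Rmin_case; lra.
      + eapply Rle_lt_trans; [apply Hx|]. apply Rmax_case; lra.
    - lra. }
  assert (HP0 : P 0 = 0) by (rewrite HP; [ring|rewrite Rabs_R0; lra]).
  assert (Hlim : g r = D 0).
  { destruct (Req_dec (g r) (D 0)) as [|Hne]; auto. exfalso.
    assert (Hsig : Rabs 0 < sig) by (rewrite Rabs_R0; lra).
    pose proof (proj1 (is_derive_Reals P 0 (D 0)) (HD 0 Hsig)) as HL.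
    destruct (HL (Rabs (g r - D 0))) as [del Hdel]. { apply Rabs_pos_lt. lra. }
    set (h := Rmin (del / 2) (r / 2)).
    assert (Hh : 0 < h) by (unfold h; apply Rmin_pos; [pose proof (cond_pos del)|]; lra).
    assert (Hh2 : h < del) by (unfold h; eapply Rle_lt_trans; [apply Rmin_l|]; pose proof (cond_pos del); lra).
    assert (Hh3 : h < r) by (unfold h; eapply Rle_lt_trans; [apply Rmin_r|]; lra).
    specialize (Hdel h ltac:(lra) ltac:(rewrite Rabs_right; lra)).
    rewrite Rplus_0_l, HP0, Rminus_0_r in Hdel.
    fold (g h) in Hdel. rewrite (Hconst h ltac:(lra)) in Hdel. lra. }
  replace (P r) with (r * g r) by (unfold g; field; lra). rewrite Hlim. reflexivity.
Qed.

Section Circle.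

Variables u F : C -> C.
Variable rho : R.
Hypothesis F_deriv : forall z, Cmod z < rho -> is_cderiv F z (u z).
Hypothesis u_cont : forall z, Cmod z < rho -> ccont u z.
Variable y : C.

Let F_cont (z : C) (Hz : Cmod z < rho) : ccont F z.
Proof. exact (is_cderiv_ccont F z (u z) (F_deriv z Hz)). Qed.

Let circle_in (s th : R) : Cmod y + Rabs s < rho -> Cmod (y + RtoC s * expi th) < rho.
Proof. intros Hs. eapply Rle_lt_trans; [apply Cmod_circle_le|exact Hs]. Qed.

Definition circle_int (s : R) : C :=
  RInt (V:=CR) (fun th => u (y + RtoC s * expi th))%C 0 (2 * PI).
Definition circle_coef (s : R) : C :=
  RInt (V:=CR) (fun th => F (y + RtoC s * expi th) * expmi th)%C 0 (2 * PI).

Lemma is_RInt_circle_int (s : R) : Cmod y + Rabs s < rho ->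
  is_RInt (V:=CR) (fun th => u (y + RtoC s * expi th))%C 0 (2 * PI) (circle_int s).
Proof.
  intros Hs. apply (RInt_correct (V:=CR)), ex_RInt_continuous. intros z _.
  apply rcont_continuous, (rcont_circle u rho); auto.
Qed.

Lemma is_RInt_circle_coef (s : R) : Cmod y + Rabs s < rho ->
  is_RInt (V:=CR) (fun th => F (y + RtoC s * expi th) * expmi th)%C 0 (2 * PI) (circle_coef s).
Proof.
  intros Hs. apply (RInt_correct (V:=CR)), ex_RInt_continuous. intros z _.
  apply rcont_continuous, rcont_mult; [apply (rcont_circle F rho _ _ _ F_cont); auto|apply rcont_expmi].
Qed.

Lemma circle_int_0 : circle_int 0 = (RtoC (2 * PI) * u y)%C.
Proof.
  unfold circle_int. apply (is_RInt_unique (V:=CR)).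
  pose proof (is_RInt_const (V:=CR) 0 (2 * PI) (u y)) as H.
  replace (RtoC (2 * PI) * u y)%C with (scal (V:=CR) (2 * PI - 0) (u y))
    by (rewrite scal_R_Cmult; f_equal; f_equal; ring).
  eapply is_RInt_ext; [|exact H]. intros x _. simpl. f_equal. ring.
Qed.

(* The th-derivative of F(y + s e^(i th)) e^(-i th) is i s u(y + s e^(i th)) - i F(y + s e^(i th)) e^(-i th),
   and it integrates to 0 over a period. *)
Lemma circle_coef_eq (s : R) : Cmod y + Rabs s < rho -> circle_coef s = (RtoC s * circle_int s)%C.
Proof.
  intros Hs.
  set (g := fun th => (F (y + RtoC s * expi th) * expmi th)%C).
  set (dg := fun th => (u (y + RtoC s * expi th) * (RtoC s * (Ci * expi th)) * expmi th
                        + F (y + RtoC s * expi th) * (- Ci * expmi th))%C).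
  assert (Hd : forall th, is_rderiv g th (dg th)).
  { intros th. unfold g, dg. apply is_rderiv_mult; [|apply is_rderiv_expmi].
    apply is_rderiv_comp; [apply F_deriv; auto|]. apply is_rderiv_affine, is_rderiv_expi. }
  assert (Hdc : forall th, rcont dg th).
  { intros th. unfold dg. apply rcont_plus; apply rcont_mult.
    - apply rcont_mult; [apply (rcont_circle u rho); auto|].
      apply rcont_mult; [apply rcont_const|]. apply rcont_mult; [apply rcont_const|apply rcont_expi].
    - apply rcont_expmi.
    - apply (rcont_circle F rho _ _ _ F_cont); auto.
    - apply rcont_mult; [apply rcont_const|apply rcont_expmi]. }
  pose proof (is_RInt_derive (V:=CR) g dg 0 (2 * PI)
     (fun x _ => is_rderiv_is_derive _ _ _ (Hd x)) (fun x _ => rcont_continuous _ _ (Hdc x))) as H.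
  assert (E0 : minus (G:=CR) (g (2 * PI)) (g 0) = RtoC 0).
  { unfold g. rewrite expi_2PI, expmi_2PI. destruct (F (y + RtoC s * expi 0)%C * expmi 0)%C.
    C_ext_field; unfold minus, plus, opp; simpl; ring. }
  rewrite E0 in H.
  assert (H2 : is_RInt (V:=CR) dg 0 (2 * PI) (Ci * RtoC s * circle_int s + - Ci * circle_coef s)%C).
  { pose proof (is_RInt_Cmult _ _ _ _ (Ci * RtoC s)%C (is_RInt_circle_int s Hs)) as H3.
    pose proof (is_RInt_Cmult _ _ _ _ (- Ci)%C (is_RInt_circle_coef s Hs)) as H4.
    eapply is_RInt_ext; [|exact (is_RInt_Cplus _ _ _ _ _ _ H3 H4)]. intros x _. unfold dg.
    replace (u (y + RtoC s * expi x) * (RtoC s * (Ci * expi x)) * expmi x)%C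
      with (Ci * RtoC s * u (y + RtoC s * expi x) * (expi x * expmi x))%C by ring.
    rewrite expi_expmi. match goal with |- ?a = ?b => change (@eq C a b) end. ring. }
  pose proof (is_RInt_C_unique _ _ _ _ _ H H2) as E.
  apply Ceq_minus.
  replace (circle_coef s - RtoC s * circle_int s)%C
    with (Ci * (Ci * RtoC s * circle_int s + - Ci * circle_coef s))%C.
  2:{ replace (Ci * (Ci * RtoC s * circle_int s + - Ci * circle_coef s))%C
        with ((Ci * Ci) * (RtoC s * circle_int s - circle_coef s))%C by ring.
      replace (Ci * Ci)%C with (RtoC (-1)) by (unfold Ci; C_ext_field). C_ext_field. }
  rewrite <- E. ring.
Qed.

Section RealPart.

Variable pi : C -> R.
Hypothesis pi_functional : Rfunctional pi.

Definition coef_integrand (s th : R) : R := pi (F (y + RtoC s * expi th) * expmi th)%C.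

Lemma is_derive_coef_integrand (s th : R) : Cmod y + Rabs s < rho ->
  is_derive (fun z => coef_integrand z th) s (pi (u (y + RtoC s * expi th))).
Proof.
  intros Hs. unfold coef_integrand.
  replace (u (y + RtoC s * expi th)%C) with (u (y + RtoC s * expi th)%C * expi th * expmi th)%C
    by (rewrite <- Cmult_assoc, expi_expmi; ring).
  apply is_derive_Rfunctional_comp; auto.
  assert (D1 : is_rderiv (fun z => y + RtoC z * expi th)%C s (expi th)).
  { intros eps He. exists 1. split; [lra|]. intros h _.
    replace (y + RtoC (s + h) * expi th - (y + RtoC s * expi th) - RtoC h * expi th)%C
      with (RtoC 0) by (rewrite RtoC_plus; ring).
    rewrite Cmod_0. pose proof (Rabs_pos h). nra. }
  pose proof (is_rderiv_comp F _ _ s _ (F_deriv _ (circle_in s th Hs)) D1) as D2.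
  intros eps He. destruct (D2 eps He) as [del [Hdel Hh]].
  exists del. split; auto. intros h Hh'. specialize (Hh h Hh').
  match goal with |- Cmod ?X <= _ =>
    replace X with ((F (y + RtoC (s + h)%R * expi th) - F (y + RtoC s * expi th)
                     - RtoC h * (u (y + RtoC s * expi th) * expi th)) * expmi th)%C by ring end.
  rewrite Cmod_mult, Cmod_expmi. lra.
Qed.

Lemma continuity_2d_circle (s0 th : R) : Cmod y + Rabs s0 < rho ->
  continuity_2d_pt (fun s t => pi (u (y + RtoC s * expi t))) s0 th.
Proof.
  intros Hs0 eps.
  set (z0 := (y + RtoC s0 * expi th)%C).
  destruct (u_cont z0 (circle_in s0 th Hs0) eps (cond_pos eps)) as [du [Hdu Hu0]].
  set (K := Rabs s0 + 1).
  assert (HK : 0 < K) by (unfold K; pose proof (Rabs_pos s0); lra).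
  destruct (rcont_expi th (du / (2 * K))) as [de [Hde Hee]]. { apply Rdiv_lt_0_compat; lra. }
  assert (Hpos : 0 < Rmin de (du / 2)) by (apply Rmin_pos; lra).
  exists (mkposreal _ Hpos). intros s t Hs Ht. simpl in Hs, Ht.
  assert (Hs2 : Rabs (s - s0) < du / 2) by (eapply Rlt_le_trans; [exact Hs|apply Rmin_r]).
  assert (Ht1 : Rabs (t - th) < de) by (eapply Rlt_le_trans; [exact Ht|apply Rmin_l]).
  rewrite <- (pi_sub _ pi_functional). eapply Rle_lt_trans; [apply (pi_bnd _ pi_functional)|].
  apply Hu0. specialize (Hee t Ht1).
  replace (y + RtoC s * expi t - z0)%C with (RtoC (s - s0) * expi t + RtoC s0 * (expi t - expi th))%C
    by (unfold z0; rewrite RtoC_minus; ring).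
  eapply Rle_lt_trans; [apply Cmod_triangle|]. rewrite !Cmod_RtoC_mult, Cmod_expi.
  assert (Rabs s0 * Cmod (expi t - expi th) <= K * (du / (2 * K))).
  { apply Rmult_le_compat; [apply Rabs_pos|apply Cmod_ge_0|unfold K; lra|lra]. }
  assert (K * (du / (2 * K)) = du / 2) by (field; lra).
  lra.
Qed.

(* Differentiation under the integral sign, componentwise. *)
Lemma is_derive_circle_coef (s0 : R) : Cmod y + Rabs s0 < rho ->
  is_derive (fun s => pi (circle_coef s)) s0 (pi (circle_int s0)).
Proof.
  intros Hs0.
  set (m := rho - Cmod y - Rabs s0). assert (Hm : 0 < m) by (unfold m; lra).
  assert (Hnear : locally s0 (fun s => Cmod y + Rabs s < rho)).
  { exists (mkposreal m Hm). intros s Hs. change (Rabs (s - s0) < m) in Hs.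
    pose proof (Rabs_triang_inv s s0). unfold m in Hs.
    assert (Rabs s <= Rabs s0 + Rabs (s - s0))
      by (replace s with (s0 + (s - s0)) at 1 by ring; apply Rabs_triang). lra. }
  assert (HDer : forall s t, Cmod y + Rabs s < rho ->
            Derive (fun z => coef_integrand z t) s = pi (u (y + RtoC s * expi t))).
  { intros s t Hs. apply is_derive_unique, is_derive_coef_integrand, Hs. }
  apply (is_derive_ext_loc (fun s => RInt (fun th => coef_integrand s th) 0 (2 * PI))).
  { apply (filter_imp (fun s => Cmod y + Rabs s < rho)); [|exact Hnear]. intros s Hs. apply is_RInt_unique.
    apply is_RInt_Rfunctional, is_RInt_circle_coef; auto. }
  replace (pi (circle_int s0)) with (RInt (fun th => Derive (fun z => coef_integrand z th) s0) 0 (2 * PI)).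
  2:{ apply is_RInt_unique. eapply is_RInt_ext; [|apply is_RInt_Rfunctional, is_RInt_circle_int; eauto].
      intros th _. symmetry. apply HDer, Hs0. }
  apply is_derive_RInt_param.
  - apply (filter_imp (fun s => Cmod y + Rabs s < rho)); [|exact Hnear]. intros s Hs th _. eexists. apply is_derive_coef_integrand, Hs.
  - intros th _. eapply continuity_2d_pt_ext_loc; [|apply (continuity_2d_circle s0 th Hs0)].
    destruct Hnear as [d Hd]. exists d. intros s t Hs _. symmetry. apply HDer, Hd, Hs.
  - apply (filter_imp (fun s => Cmod y + Rabs s < rho)); [|exact Hnear]. intros s Hs.
    apply (ex_RInt_continuous (V:=R_CompleteNormedModule)). intros z _. unfold coef_integrand.
    apply (continuous_Rfunctional_comp pi (fun th => F (y + RtoC s * expi th) * expmi th)%C); auto.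
    apply rcont_mult; [apply (rcont_circle F rho _ _ _ F_cont); auto|apply rcont_expmi].
Qed.

End RealPart.

(* By circle_coef_eq and is_derive_circle_coef, P = pi o circle_coef satisfies P s = s P' s,
   so it is linear, with slope P'(0) = pi (2 PI u y). *)
Theorem circle_coef_value (r : R) : 0 < r -> Cmod y + r < rho ->
  circle_coef r = (RtoC r * (RtoC (2 * PI) * u y))%C.
Proof.
  intros Hr Hyr.
  assert (Hpi : forall pi, Rfunctional pi -> pi (circle_coef r) = r * pi (circle_int 0)).
  { intros pi Hp.
    apply (linear_of_eq_mul_derive (fun s => pi (circle_coef s)) (fun s => pi (circle_int s)) (rho - Cmod y)).
    - intros s Hs. apply is_derive_circle_coef; auto. lra.
    - intros s Hs. rewrite circle_coef_eq by lra. apply (pi_scal _ Hp).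
    - lra. }
  rewrite <- circle_int_0.
  pose proof (Hpi fst Rfunctional_fst) as Hre. pose proof (Hpi snd Rfunctional_snd) as Him.
  destruct (circle_int 0). apply injective_projections; simpl in *; [rewrite Hre|rewrite Him]; ring.
Qed.

End Circle.

Lemma circle_coef_lipschitz (u F : C -> C) (rho M r : R) (x y : C) :
  (forall z, Cmod z < rho -> is_cderiv F z (u z)) -> 0 <= r ->
  Cmod x + r < rho -> Cmod y + r < rho ->
  (forall a b, Cmod a < rho -> Cmod b < rho -> Cmod (F a - F b) <= M * Cmod (a - b)) ->
  Cmod (circle_coef F x r - circle_coef F y r) <= 2 * PI * (M * Cmod (x - y)).
Proof.
  intros HF Hr Hx Hy HL.
  pose proof (is_RInt_circle_coef u F rho HF x r ltac:(rewrite Rabs_right; lra)) as Px.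
  pose proof (is_RInt_circle_coef u F rho HF y r ltac:(rewrite Rabs_right; lra)) as Py.
  pose proof (is_RInt_minus (V:=CR) _ _ _ _ _ _ Px Py) as Pd.
  rewrite <- norm_CR.
  change (circle_coef F x r - circle_coef F y r)%C with (minus (G:=CR) (circle_coef F x r) (circle_coef F y r)).
  replace (2 * PI * (M * Cmod (x - y))) with ((2 * PI - 0) * (M * Cmod (x - y))) by ring.
  eapply (norm_RInt_le_const (V:=C_R_NormedModule)); [pose proof PI_RGT_0; lra| |exact Pd].
  intros th Hth. rewrite norm_CR.
  match goal with |- Cmod ?X <= _ =>
    replace X with ((F (x + RtoC r * expi th) - F (y + RtoC r * expi th)) * expmi th)%C end.
  2:{ symmetry. transitivity (F (x + RtoC r * expi th) * expmi th - F (y + RtoC r * expi th) * expmi th)%C.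
      - apply injective_projections; reflexivity.
      - ring. }
  rewrite Cmod_mult, Cmod_expmi, Rmult_1_r.
  replace (x - y)%C with ((x + RtoC r * expi th) - (y + RtoC r * expi th))%C by ring.
  apply HL; (eapply Rle_lt_trans; [apply Cmod_circle_le|]; rewrite Rabs_right; lra).
Qed.

(* u is recovered from its primitive F through circle_coef_value, and F is M-Lipschitz. *)
Theorem cauchy_lipschitz (u : C -> C) (Rd M : R) : 0 < Rd ->
  (forall z, Cmod z < Rd -> exists l, is_cderiv u z l) ->
  (forall z, Cmod z < Rd -> Cmod (u z) <= M) ->
  forall x y, Cmod x < Rd / 8 -> Cmod y < Rd / 8 -> Cmod (u x - u y) <= 8 * M / Rd * Cmod (x - y).
Proof.
  intros HR Hd HM x y Hx Hy.
  set (rho := Rd / 2). set (r := Rd / 8).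
  assert (Hd' : forall z, Cmod z <= rho -> exists l, is_cderiv u z l)
    by (intros z Hz; apply Hd; unfold rho in Hz; lra).
  assert (HF : forall z, Cmod z < rho -> is_cderiv (cprimitive u) z (u z))
    by (intros z Hz; exact (is_cderiv_cprimitive u rho Hd' z Hz)).
  assert (Hu : forall z, Cmod z < rho -> ccont u z).
  { intros z Hz. destruct (Hd z ltac:(unfold rho in Hz; lra)) as [l Hl]. exact (is_cderiv_ccont u z l Hl). }
  assert (HL : forall a b, Cmod a < rho -> Cmod b < rho ->
             Cmod (cprimitive u a - cprimitive u b) <= M * Cmod (a - b)).
  { intros a b Ha Hb. rewrite Cmod_sub_sym, (Cmod_sub_sym a b).
    apply (cprimitive_lipschitz u rho Hd'); try lra.
    intros z Hz. apply HM. unfold rho in Hz. lra. }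
  pose proof (circle_coef_lipschitz u (cprimitive u) rho M r x y HF ltac:(unfold r; lra)
                ltac:(unfold rho, r; lra) ltac:(unfold rho, r; lra) HL) as Hdiff.
  rewrite (circle_coef_value u _ rho HF Hu x r), (circle_coef_value u _ rho HF Hu y r) in Hdiff
    by (unfold rho, r; lra).
  replace (RtoC r * (RtoC (2 * PI) * u x) - RtoC r * (RtoC (2 * PI) * u y))%C
    with (RtoC (r * (2 * PI)) * (u x - u y))%C in Hdiff by (rewrite RtoC_mult; ring).
  rewrite Cmod_RtoC_mult in Hdiff. pose proof PI_RGT_0.
  rewrite Rabs_right in Hdiff by (unfold r; nra).
  apply Rmult_le_reg_l with (r := r * (2 * PI)); [unfold r; nra|].
  replace (r * (2 * PI) * (8 * M / Rd * Cmod (x - y))) with (2 * PI * (M * Cmod (x - y))) by (unfold r; field; lra).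
  exact Hdiff.
Qed.

(** * Straight-line homotopies avoiding fixed points *)

Definition rel_cont_at (gam : R -> C) (t : R) := forall eps, 0 < eps -> exists del, 0 < del /\
  forall t', unit_interval t' -> Rabs (t' - t) < del -> Cmod (gam t' - gam t) < eps.

Lemma path_continuous_rel_cont (gam : R -> C) :
  path_continuous gam <-> forall t, unit_interval t -> rel_cont_at gam t.
Proof.
  split.
  - intros Hg t Ht eps He.
    destruct (proj1 (filterlim_locally _ _) (Hg t Ht) (mkposreal (eps / 2) ltac:(lra))) as [d Hd].
    exists d. split; [apply cond_pos|]. intros t' Ht' Hd'.
    specialize (Hd t' Hd' Ht'). apply Cmod_lt_of_ball_C in Hd. simpl in Hd. lra.
  - intros Hg t Ht. apply filterlim_locally. intros eps.
    destruct (Hg t Ht eps (cond_pos eps)) as [d [Hd Hs]].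
    exists (mkposreal d Hd). intros t' Hb Hin. apply ball_C_of_Cmod_lt, Hs; auto.
Qed.

Lemma rcont_segment (a b : C) (t : R) : rcont (segment a b) t.
Proof. exact (is_rderiv_rcont _ _ _ (is_rderiv_line a b t)). Qed.

Lemma path_continuous_comp_segment (F : C -> C) (a b : C) :
  (forall t, unit_interval t -> ccont F (segment a b t)) -> path_continuous (fun t => F (segment a b t)).
Proof.
  intros HF. apply path_continuous_rel_cont. intros t Ht eps He.
  destruct (rcont_comp F (segment a b) t (HF t Ht) (rcont_segment a b t) eps He) as [d [Hd Hc]].
  exists d. split; auto.
Qed.

Lemma path_continuous_segment (a b : C) : path_continuous (segment a b).
Proof. apply (path_continuous_comp_segment (fun z => z)). intros t _ eps He. exists eps. auto. Qed.

Lemma segment_in_disk (a b : C) (r t : R) :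
  Cmod a < r -> Cmod b < r -> unit_interval t -> Cmod (segment a b t) < r.
Proof. apply disk_convex. Qed.

Lemma segment_0 (a b : C) : segment a b 0 = a.
Proof. unfold segment. ring. Qed.

Lemma segment_1 (a b : C) : segment a b 1 = b.
Proof. unfold segment. ring. Qed.

Definition straight_homotopy (gam0 gam1 : R -> C) (p : R * R) : C :=
  (RtoC (1 - fst p) * gam0 (snd p) + RtoC (fst p) * gam1 (snd p))%C.

Lemma straight_cont (gam0 gam1 : R -> C) (p : R * R) :
  unit_square p -> rel_cont_at gam0 (snd p) -> rel_cont_at gam1 (snd p) ->
  filterlim (straight_homotopy gam0 gam1) (within unit_square (locally p)) (locally (straight_homotopy gam0 gam1 p)).
Proof.
  destruct p as [s t]. simpl. intros [Hs Ht] H0 H1. apply filterlim_locally. intros eps.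
  set (K := Cmod (gam0 t) + Cmod (gam1 t) + 1).
  assert (HK : 0 < K) by (unfold K; pose proof (Cmod_ge_0 (gam0 t)); pose proof (Cmod_ge_0 (gam1 t)); lra).
  pose proof (cond_pos eps) as He.
  destruct (H0 (eps / 4)) as [d1 [Hd1 Hc0]]; [lra|].
  destruct (H1 (eps / 4)) as [d2 [Hd2 Hc1]]; [lra|].
  assert (Hd : 0 < Rmin (Rmin d1 d2) (eps / (4 * K))).
  { repeat apply Rmin_pos; try lra. apply Rdiv_lt_0_compat; lra. }
  exists (mkposreal _ Hd). intros [s' t'] [Hds Hdt] [Hs' Ht']. simpl in *.
  change (Rabs (s' - s) < Rmin (Rmin d1 d2) (eps / (4 * K))) in Hds.
  change (Rabs (t' - t) < Rmin (Rmin d1 d2) (eps / (4 * K))) in Hdt.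
  apply ball_C_of_Cmod_lt. unfold straight_homotopy, unit_interval in *. simpl.
  assert (Ht1 : Rabs (t' - t) < d1) by (eapply Rlt_le_trans; [exact Hdt|]; eapply Rle_trans; [apply Rmin_l|apply Rmin_l]).
  assert (Ht2 : Rabs (t' - t) < d2) by (eapply Rlt_le_trans; [exact Hdt|]; eapply Rle_trans; [apply Rmin_l|apply Rmin_r]).
  assert (Hs3 : Rabs (s' - s) < eps / (4 * K)) by (eapply Rlt_le_trans; [exact Hds|apply Rmin_r]).
  specialize (Hc0 t' Ht' Ht1). specialize (Hc1 t' Ht' Ht2).
  replace (RtoC (1 - s') * gam0 t' + RtoC s' * gam1 t' - (RtoC (1 - s) * gam0 t + RtoC s * gam1 t))%C
    with (RtoC (1 - s') * (gam0 t' - gam0 t) + RtoC s' * (gam1 t' - gam1 t) + RtoC (s' - s) * (gam1 t - gam0 t))%C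
    by (rewrite !RtoC_minus; ring).
  eapply Rle_lt_trans; [apply Cmod_triangle|].
  eapply Rle_lt_trans; [apply Rplus_le_compat_r; apply Cmod_triangle|].
  rewrite !Cmod_RtoC_mult, (Rabs_right (1 - s')), (Rabs_right s') by lra.
  assert (Cmod (gam1 t - gam0 t) <= K).
  { replace (gam1 t - gam0 t)%C with (gam1 t + - gam0 t)%C by ring.
    eapply Rle_trans; [apply Cmod_triangle|]. rewrite Cmod_opp. unfold K. lra. }
  assert (Rabs (s' - s) * Cmod (gam1 t - gam0 t) <= eps / (4 * K) * K).
  { apply Rmult_le_compat; try apply Rabs_pos; try apply Cmod_ge_0; lra. }
  assert (eps / (4 * K) * K = eps / 4) by (field; lra).
  pose proof (Cmod_ge_0 (gam0 t' - gam0 t)). pose proof (Cmod_ge_0 (gam1 t' - gam1 t)).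
  nra.
Qed.

Lemma homotopic_rel_endpoints_straight (X : C -> Prop) (gam0 gam1 : R -> C) :
  path_continuous gam0 -> path_continuous gam1 -> gam0 0 = gam1 0 -> gam0 1 = gam1 1 ->
  (forall p, unit_square p -> X (straight_homotopy gam0 gam1 p)) ->
  homotopic_rel_endpoints X gam0 gam1.
Proof.
  intros H0 H1 E0 E1 HX.
  do 4 (split; [assumption|]).
  exists (straight_homotopy gam0 gam1). unfold straight_homotopy; simpl.
  repeat split; auto.
  - intros p Hp. apply straight_cont; [exact Hp| |];
      apply path_continuous_rel_cont; [exact H0|apply Hp|exact H1|apply Hp].
  - intros t _. replace (1 - 0) with 1 by ring. ring.
  - intros t _. replace (1 - 1) with 0 by ring. ring.
  - intros s _. rewrite E0, RtoC_minus. ring.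
  - intros s _. rewrite E1, RtoC_minus. ring.
Qed.

Section FixpointAvoidance.

Variable f : C -> C.
Variable rho : R.
Hypothesis displacement_lipschitz : forall x y, Cmod x < rho -> Cmod y < rho ->
  Cmod ((f x - x) - (f y - y)) <= 1/3 * Cmod (x - y).

Variable z0 : C.
Hypothesis z0_in : Cmod z0 < rho.
Hypothesis z1_in : Cmod (f z0) < rho.
Hypothesis z0_not_fixed : f z0 <> z0.

Let z1 := f z0.

Lemma displacement_le_fixpoint_dist (w x : C) : Cmod w < rho -> f w = w ->
  Cmod x < rho -> Cmod (f x - x) <= 1/3 * Cmod (x - w).
Proof.
  intros Hw Hfw Hx. specialize (displacement_lipschitz x w Hx Hw).
  rewrite Hfw in displacement_lipschitz.
  replace (f x - x - (w - w))%C with (f x - x)%C in displacement_lipschitz by ring. exact displacement_lipschitz.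
Qed.

Lemma endpoints_near_fixpoint (w : C) (t : R) : Cmod w < rho -> f w = w -> 0 <= t <= 1 ->
  Cmod (z0 - w) <= 3/2 * Cmod (segment z0 z1 t - w) /\ Cmod (z1 - w) <= 3/2 * Cmod (segment z0 z1 t - w).
Proof.
  intros Hw Hfw Ht.
  pose proof (displacement_le_fixpoint_dist w z0 Hw Hfw z0_in) as Hh.
  set (zeta := segment z0 z1 t). set (D := Cmod (zeta - w)).
  assert (Hz0 : Cmod (z0 - zeta) <= Cmod (f z0 - z0)).
  { unfold zeta, segment, z1. replace (z0 - (z0 + RtoC t * (f z0 - z0)))%C with (- (RtoC t * (f z0 - z0)))%C by ring.
    rewrite Cmod_opp, Cmod_RtoC_mult, Rabs_right by lra. pose proof (Cmod_ge_0 (f z0 - z0)). nra. }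
  assert (Hz1 : Cmod (z1 - zeta) <= Cmod (f z0 - z0)).
  { unfold zeta, segment, z1. replace (f z0 - (z0 + RtoC t * (f z0 - z0)))%C with (RtoC (1 - t) * (f z0 - z0))%C
      by (rewrite RtoC_minus; ring).
    rewrite Cmod_RtoC_mult, Rabs_right by lra. pose proof (Cmod_ge_0 (f z0 - z0)). nra. }
  assert (Cmod (z0 - w) <= Cmod (z0 - zeta) + D)
    by (replace (z0 - w)%C with ((z0 - zeta) + (zeta - w))%C by ring; apply Cmod_triangle).
  assert (Cmod (z1 - w) <= Cmod (z1 - zeta) + D)
    by (replace (z1 - w)%C with ((z1 - zeta) + (zeta - w))%C by ring; apply Cmod_triangle).
  lra.
Qed.

Lemma segment_ne_fixpoint (w : C) (t : R) : Cmod w < rho -> f w = w -> 0 <= t <= 1 ->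
  segment z0 z1 t <> w.
Proof.
  intros Hw Hfw Ht Heq. destruct (endpoints_near_fixpoint w t Hw Hfw Ht) as [H0 _].
  rewrite Heq in H0. replace (w - w)%C with (RtoC 0) in H0 by ring. rewrite Cmod_0 in H0.
  apply z0_not_fixed. replace z0 with w; [exact Hfw|].
  symmetry. apply Ceq_minus, Cmod_eq_0. pose proof (Cmod_ge_0 (z0 - w)). lra.
Qed.

(* The displacement h = f - id is small near w; the straight homotopy differs from segment z0 z1 t
   by a convex combination of the values of h at z0, z1 and segment z0 z1 t. *)
Lemma straight_near_segment (w : C) (s t : R) : Cmod w < rho -> f w = w -> 0 <= s <= 1 -> 0 <= t <= 1 ->
  Cmod (straight_homotopy (segment z1 (f z1)) (fun t => f (segment z0 z1 t)) (s, t) - segment z0 z1 t)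
  <= Cmod (segment z0 z1 t - w) / 2.
Proof.
  intros Hw Hfw Hs Ht. unfold straight_homotopy; simpl.
  set (h := fun x => (f x - x)%C). set (zeta := segment z0 z1 t). set (D := Cmod (zeta - w)).
  assert (Hh : forall x, Cmod x < rho -> Cmod (h x) <= 1/3 * Cmod (x - w))
    by (intros; apply displacement_le_fixpoint_dist; auto).
  assert (Hzeta : Cmod zeta < rho) by (apply disk_convex; auto).
  destruct (endpoints_near_fixpoint w t Hw Hfw Ht) as [H0 H1]. fold zeta D in H0, H1.
  replace (RtoC (1 - s) * segment z1 (f z1) t + RtoC s * f zeta - zeta)%C
    with (RtoC (1 - s) * (RtoC (1 - t) * h z0 + RtoC t * h z1) + RtoC s * h zeta)%C
    by (unfold h, zeta, segment, z1; rewrite !RtoC_minus; ring).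
  assert (Hin : Cmod (RtoC (1 - t) * h z0 + RtoC t * h z1) <= 1/2 * D).
  { eapply Rle_trans; [apply Cmod_triangle|]. rewrite !Cmod_RtoC_mult, (Rabs_right (1 - t)), (Rabs_right t) by lra.
    pose proof (Hh z0 z0_in). pose proof (Hh z1 z1_in).
    pose proof (Cmod_ge_0 (h z0)). pose proof (Cmod_ge_0 (h z1)). nra. }
  pose proof (Hh zeta Hzeta). fold D in H.
  eapply Rle_trans; [apply Cmod_triangle|]. rewrite !Cmod_RtoC_mult, (Rabs_right (1 - s)), (Rabs_right s) by lra.
  pose proof (Cmod_ge_0 (zeta - w)). fold D in H2. nra.
Qed.

Lemma straight_ne_fixpoint (w : C) (p : R * R) : Cmod w < rho -> f w = w -> unit_square p ->
  straight_homotopy (segment z1 (f z1)) (fun t => f (segment z0 z1 t)) p <> w.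
Proof.
  destruct p as [s t]. intros Hw Hfw [Hs Ht] Heq.
  pose proof (straight_near_segment w s t Hw Hfw Hs Ht) as H. rewrite Heq, Cmod_sub_sym in H.
  apply (segment_ne_fixpoint w t Hw Hfw Ht), Ceq_minus, Cmod_eq_0.
  pose proof (Cmod_ge_0 (segment z0 z1 t - w)). lra.
Qed.

End FixpointAvoidance.

Lemma straight_in_punctured_disk (f : C -> C) (rho r1 r2 : R) (P : C -> Prop) (z0 : C) :
  (forall x y, Cmod x < rho -> Cmod y < rho -> Cmod ((f x - x) - (f y - y)) <= 1/3 * Cmod (x - y)) ->
  f (RtoC 0) = RtoC 0 -> (forall w, Cmod w < rho -> P w -> f w = w) ->
  r2 <= rho / 2 -> r2 <= r1 / 2 -> Cmod z0 < r2 -> Cmod (f z0) < r2 -> f z0 <> z0 ->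
  forall p, unit_square p ->
    let H := straight_homotopy (segment (f z0) (f (f z0))) (fun t => f (segment z0 (f z0) t)) p in
    disk r1 H /\ H <> RtoC 0 /\ ~ P H.
Proof.
  intros Hlip Hf0 HP Hr2 Hr2' Hz0 Hz1 Hnf0 [s t] Hp H. pose proof Hp as [Hs Ht]. simpl in Hs, Ht.
  pose proof (Cmod_ge_0 z0).
  assert (Hin : Cmod z0 < rho /\ Cmod (f z0) < rho) by lra.
  assert (Havoid : forall w, Cmod w < rho -> f w = w -> H <> w)
    by (intros w Hw Hfw; apply (straight_ne_fixpoint f rho Hlip z0); tauto).
  pose proof (straight_near_segment f rho Hlip z0 (proj1 Hin) (proj2 Hin) (RtoC 0) s t
                ltac:(rewrite Cmod_0; lra) Hf0 Hs Ht) as Hnear. fold H in Hnear.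
  pose proof (segment_in_disk z0 (f z0) r2 t Hz0 Hz1 Ht) as Hseg.
  replace (segment z0 (f z0) t - RtoC 0)%C with (segment z0 (f z0) t) in Hnear by ring.
  assert (HH : Cmod H < 3/2 * r2).
  { replace H with ((H - segment z0 (f z0) t) + segment z0 (f z0) t)%C by ring.
    eapply Rle_lt_trans; [apply Cmod_triangle|]. lra. }
  split; [|split].
  - unfold disk. lra.
  - apply (Havoid (RtoC 0)); [rewrite Cmod_0; lra|exact Hf0].
  - intros HPH. apply (Havoid H); [lra| |reflexivity]. apply HP; [lra|exact HPH].
Qed.

(** * Small displacements near a parabolic fixed point *)

Lemma iterc_fixpoint (q : nat) (g : C -> C) (a : C) : g a = a -> iterc q g a = a.
Proof. intros H. induction q as [|q IH]; simpl; [reflexivity|]. rewrite IH. exact H. Qed.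

Lemma fixes_0_of_linear_approx (g : C -> C) (lam : C) :
  (exists K d, 0 < d /\ forall z, Cmod z < d -> Cmod (g z - lam * z) <= K * Cmod z ^ 2) ->
  g (RtoC 0) = RtoC 0.
Proof.
  intros [K [d [Hd Hg]]]. specialize (Hg (RtoC 0) ltac:(rewrite Cmod_0; lra)).
  rewrite Cmod_0 in Hg. replace (lam * RtoC 0)%C with (RtoC 0) in Hg by ring.
  replace (g (RtoC 0) - RtoC 0)%C with (g (RtoC 0)) in Hg by ring.
  apply Cmod_eq_0. pose proof (Cmod_ge_0 (g (RtoC 0))). simpl in Hg. lra.
Qed.

Lemma pow_le_sq (x : R) (n : nat) : 0 <= x <= 1 -> (2 <= n)%nat -> x ^ n <= x ^ 2.
Proof.
  intros Hx Hn. replace n with (2 + (n - 2))%nat by lia. rewrite pow_add.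
  assert (x ^ (n - 2) <= 1) by (rewrite <- (pow1 (n - 2)); apply pow_incr; lra).
  assert (0 <= x ^ 2) by (apply pow_le; lra).
  assert (0 <= x ^ (n - 2)) by (apply pow_le; lra). nra.
Qed.

Lemma sub_id_quadratic_of_expansion (f : C -> C) (q : nat) (b : C) (K d : R) : (1 <= q)%nat ->
  (forall z, Cmod z < d ->
     Cmod (f z - (z + (Cpow z (q + 1) + b * Cpow z (2 * q + 1)))) <= K * Cmod z ^ (2 * q + 2)) ->
  forall z, Cmod z < d -> Cmod z <= 1 -> Cmod (f z - z) <= (1 + Cmod b + Rabs K) * Cmod z ^ 2.
Proof.
  intros Hq Hf z Hzd Hz1. specialize (Hf z Hzd).
  replace (f z - z)%C with ((f z - (z + (Cpow z (q + 1) + b * Cpow z (2 * q + 1))))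
                            + (Cpow z (q + 1) + b * Cpow z (2 * q + 1)))%C by ring.
  eapply Rle_trans; [apply Cmod_triangle|].
  eapply Rle_trans; [apply Rplus_le_compat_l, Cmod_triangle|].
  rewrite Cmod_mult, !Cmod_pow.
  set (x := Cmod z) in *. assert (Hx0 : 0 <= x) by apply Cmod_ge_0.
  assert (P1 : x ^ (q + 1) <= x ^ 2) by (apply pow_le_sq; lia || lra).
  assert (P2 : x ^ (2 * q + 1) <= x ^ 2) by (apply pow_le_sq; lia || lra).
  assert (P3 : x ^ (2 * q + 2) <= x ^ 2) by (apply pow_le_sq; lia || lra).
  assert (P4 : 0 <= x ^ (2 * q + 2)) by (apply pow_le; lra).
  assert (K * x ^ (2 * q + 2) <= Rabs K * x ^ 2).
  { apply Rle_trans with (Rabs K * x ^ (2 * q + 2)).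
    - apply Rmult_le_compat_r; [lra|apply Rle_abs].
    - apply Rmult_le_compat_l; [apply Rabs_pos|lra]. }
  assert (Cmod b * x ^ (2 * q + 1) <= Cmod b * x ^ 2) by (apply Rmult_le_compat_l; [apply Cmod_ge_0|lra]).
  lra.
Qed.

(* sup |fn - id| <= Rd/48 + A Rd^2 <= Rd/24 on D(0, Rd), and the Cauchy estimate turns this into the
   Lipschitz constant 8 (Rd/24) / Rd = 1/3. *)
Lemma displacement_contraction (f fn : C -> C) (A Rd : R) :
  0 < Rd -> 0 <= A -> 48 * A * Rd <= 1 ->
  (forall z, Cmod z < Rd -> exists l, is_cderiv fn z l) ->
  (forall z, Cmod z < Rd -> Cmod (f z - z) <= A * Cmod z ^ 2) ->
  (forall z, Cmod z < Rd -> Cmod (fn z - f z) < Rd / 48) ->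
  forall x y, Cmod x < Rd / 8 -> Cmod y < Rd / 8 ->
    Cmod ((fn x - x) - (fn y - y)) <= 1/3 * Cmod (x - y).
Proof.
  intros HRd HA HARd Hd Hf Hfn x y Hx Hy.
  assert (HM : forall z, Cmod z < Rd -> Cmod (fn z - z) <= Rd / 24).
  { intros z Hz.
    replace (fn z - z)%C with ((fn z - f z) + (f z - z))%C by ring.
    eapply Rle_trans; [apply Cmod_triangle|].
    pose proof (Hfn z Hz). pose proof (Hf z Hz). pose proof (Cmod_ge_0 z).
    assert (A * Cmod z ^ 2 <= A * Rd ^ 2) by (apply Rmult_le_compat_l; [lra|]; simpl; nra).
    nra. }
  replace (1/3) with (8 * (Rd / 24) / Rd) by (field; lra).
  apply (cauchy_lipschitz (fun w => fn w - w)%C); auto.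
  intros z Hz. destruct (Hd z Hz) as [l Hl]. exists (l - 1)%C. apply is_cderiv_minus_id, Hl.
Qed.

Lemma exists_contraction_radius (f : C -> C) (A d : R) : 0 < d -> 0 <= A ->
  (forall z, Cmod z < d -> Cmod z <= 1 -> Cmod (f z - z) <= A * Cmod z ^ 2) ->
  exists Rd, 0 < Rd <= d /\ forall fn : C -> C,
    (forall z, Cmod z < Rd -> exists l, is_cderiv fn z l) ->
    (forall z, Cmod z < Rd -> Cmod (fn z - f z) < Rd / 48) ->
    forall x y, Cmod x < Rd / 8 -> Cmod y < Rd / 8 ->
      Cmod ((fn x - x) - (fn y - y)) <= 1/3 * Cmod (x - y).
Proof.
  intros Hd HA Hf.
  set (c := / (48 * (A + 1))).
  assert (Hc : 0 < c) by (apply Rinv_0_lt_compat; lra).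
  assert (Hc1 : 48 * (A + 1) * c = 1) by (unfold c; field; lra).
  set (Rd := Rmin d (Rmin 1 c)).
  assert (HRd : 0 < Rd) by (unfold Rd; repeat apply Rmin_pos; lra).
  assert (Hmin : Rd <= d /\ Rd <= 1 /\ Rd <= c).
  { unfold Rd. pose proof (Rmin_l d (Rmin 1 c)). pose proof (Rmin_r d (Rmin 1 c)).
    pose proof (Rmin_l 1 c). pose proof (Rmin_r 1 c). lra. }
  exists Rd. split; [lra|]. intros fn Hfn Hclose.
  apply (displacement_contraction f fn A Rd HRd HA); auto.
  - nra.
  - intros z Hz. apply Hf; lra.
Qed.

Lemma holomorphic_near_is_cderiv (K : C -> Prop) (f : C -> C) (z : C) :
  holomorphic_near K f -> K z -> is_cderiv f z (C_derive f z).
Proof. intros [U [_ [HKU HU]]] Hz. apply ex_derive_is_cderiv, HU, HKU, Hz. Qed.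

Theorem lemma4p3
  (q : nat) (lam : C) (g : C -> C) (b : C) (r0 : R)
  (gn : nat -> C -> C) (lamn : nat -> C) (wn : nat -> C) (r1 : R)
  (* q >= 1, lam a primitive q-th root of unity *)
  (Hq : (1 <= q)%nat)
  (Hlam : primitive_root q lam)
  (* g(z) = lam z + O(z^2), holomorphic near 0 *)
  (Hg_hol : exists rho, 0 < rho /\ holomorphic_on (disk rho) g)
  (Hg_exp : exists K d, 0 < d /\ forall z, Cmod z < d ->
       Cmod (Cminus (g z) (Cmult lam z)) <= K * Cmod z ^ 2)
  (* f := g^q has the form z + z^(q+1) + b z^(2q+1) + O(z^(2q+2)) *)
  (Hf_exp : exists K d, 0 < d /\ forall z, Cmod z < d ->
       Cmod (Cminus (iterc q g z)
               (Cplus z (Cplus (Cpow z (q + 1)) (Cmult b (Cpow z (2 * q + 1))))))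
       <= K * Cmod z ^ (2 * q + 2))
  (* 0 < r0 < 1, f univalent near the closed disk, 0 its only fixed point
     there, and Re f' > 0 there *)
  (Hr0 : 0 < r0 < 1)
  (Hf_univ : univalent_near (cdisk r0) (iterc q g))
  (Hf_fix : forall z, cdisk r0 z -> iterc q g z = z -> z = RtoC 0)
  (Hf_re : forall z, cdisk r0 z -> 0 < Re (C_derive (iterc q g) z))
  (* g_n(z) = lam_n z + O(z^2), |lam_n| <> 1 *)
  (Hgn_hol : forall n, exists rho, 0 < rho /\ holomorphic_on (disk rho) (gn n))
  (Hgn_exp : forall n, exists K d, 0 < d /\ forall z, Cmod z < d ->
       Cmod (Cminus (gn n z) (Cmult (lamn n) z)) <= K * Cmod z ^ 2)
  (Hlamn : forall n, Cmod (lamn n) <> 1)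
  (* f_n := g_n^q holomorphic near the closed disk, f_n -> f uniformly *)
  (Hfn_hol : forall n, holomorphic_near (cdisk r0) (iterc q (gn n)))
  (Hfn_cv : forall eps, 0 < eps -> exists N, forall n, (N <= n)%nat ->
       forall z, cdisk r0 z -> Cmod (Cminus (iterc q (gn n) z) (iterc q g z)) < eps)
  (* for large n, the fixed points of f_n in the closed disk are 0 and the
     points of the q-cycle O_n of g_n through wn n *)
  (Hcycle : exists N, forall n, (N <= n)%nat ->
       wn n <> RtoC 0 /\ exact_period q (gn n) (wn n) /\
       forall z, cdisk r0 z ->
         (iterc q (gn n) z = z <-> (z = RtoC 0 \/ in_cycle q (gn n) (wn n) z)))
  (* choice of r1 *)
  (Hr1 : 0 < r1 < r0 / 2)
  (Hr1_f : forall z, cdisk r1 z -> disk r0 (iterc q g z))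
  (Hr1_finv : forall z, cdisk r1 z -> exists w, disk r0 w /\ iterc q g w = z)
  (Hr1_fn : exists N, forall n, (N <= n)%nat ->
       forall z, cdisk r1 z -> Cmod (Cminus (iterc q (gn n) z) z) <= r1 / 2) :
  exists r2, 0 < r2 < r1 /\
  exists N, forall n, (N <= n)%nat ->
  forall z0 : C,
    let z1 := iterc q (gn n) z0 in
    let z2 := iterc q (gn n) z1 in
    disk r2 z0 -> disk r2 z1 -> disk r2 z2 ->
    iterc q (gn n) z0 <> z0 -> iterc q (gn n) z1 <> z1 ->
    iterc q (gn n) z2 <> z2 ->
    homotopic_rel_endpoints
      (fun z => disk r1 z /\ z <> RtoC 0 /\ ~ in_cycle q (gn n) (wn n) z)
      (segment z1 z2)
      (fun t => iterc q (gn n) (segment z0 z1 t)).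
Proof.
  destruct Hf_exp as [K [df [Hdf Hf_near]]].
  destruct (exists_contraction_radius (iterc q g) (1 + Cmod b + Rabs K) (Rmin df (r0 / 2)))
    as [Rd [HRd Hcontr]].
  { apply Rmin_pos; lra. }
  { pose proof (Cmod_ge_0 b). pose proof (Rabs_pos K). lra. }
  { intros z Hz. apply (sub_id_quadratic_of_expansion _ q b K df Hq Hf_near).
    pose proof (Rmin_l df (r0 / 2)). lra. }
  pose proof (Rmin_r df (r0 / 2)).
  destruct (Hfn_cv (Rd / 48)) as [N1 HN1]; [lra|].
  destruct Hcycle as [Nc Hcyc].
  pose proof (Rmin_l (Rd / 8) r1). pose proof (Rmin_r (Rd / 8) r1).
  pose proof (Rmin_pos (Rd / 8) r1 ltac:(lra) ltac:(lra)).
  exists (Rmin (Rd / 8) r1 / 2). split; [lra|]. exists (Nat.max N1 Nc).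
  intros n Hn z0 z1 z2 Hz0 Hz1 _ Hnf0 _ _.
  set (fn := iterc q (gn n)) in *.
  destruct (Hcyc n ltac:(lia)) as [_ [_ Hfix]].
  assert (Hderiv : forall z, Cmod z < Rd -> is_cderiv fn z (C_derive fn z))
    by (intros z Hz; apply (holomorphic_near_is_cderiv (cdisk r0)); [apply Hfn_hol|unfold cdisk; lra]).
  pose proof (Hcontr fn (fun z Hz => ex_intro _ _ (Hderiv z Hz))
                (fun z Hz => HN1 n ltac:(lia) z ltac:(unfold cdisk; lra))) as Hlip.
  apply homotopic_rel_endpoints_straight.
  - apply path_continuous_segment.
  - apply path_continuous_comp_segment. intros t Ht.
    pose proof (segment_in_disk z0 z1 _ t Hz0 Hz1 Ht).
    apply (is_cderiv_ccont _ _ (C_derive fn (segment z0 z1 t))), Hderiv. lra.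
  - rewrite !segment_0. reflexivity.
  - rewrite !segment_1. reflexivity.
  - apply (straight_in_punctured_disk fn (Rd / 8) r1 (Rmin (Rd / 8) r1 / 2)); auto; try lra.
    + apply iterc_fixpoint, (fixes_0_of_linear_approx _ _ (Hgn_exp n)).
    + intros w Hw Hcw. apply Hfix; [unfold cdisk; lra|now right].
Qed.
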